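(* Let $p^*_\infty$ be the correlation defined in the context. Then $p^*_\infty\in\mathcal C_{qs}^{3,4,\infty,\infty}$, and there exist constants $c>0$, $\delta_0>0$ such that for every $\delta\in(0,\delta_0]$, every positive integer $N$, and every $p\in\mathcal C_{q\le N}^{3,4,\infty,\infty}$ with $|p-p^*_\infty|_{corr}\le\delta$, we have $N\ge c\,\delta^{-1/32}$ (i.e. $N=\Omega(\delta^{-1/32})$).
   Context: Work on $\ell^2(\mathbb N)$ with orthonormal basis $\{|i\rangle\}_{i\in\mathbb N}$. Let $c_i=C(i+1)^{-8}$ with $C>0$ such that $\sum_{i\ge0}c_i^2=1$, and $|\Psi_\infty\rangle=\sum_{i\ge0}c_i|ii\rangle$. Let $O_k(\mu,s):=\cos\mu\,(|k\rangle\langle k|-|k+1\rangle\langle k+1|)+s\sin\mu\,(|k\rangle\langle k+1|+|k+1\rangle\langle k|)$, $s\in\{+,-\}$, which has one $+1$ and one $-1$ unit eigenvector in $\mathrm{span}\{|k\rangle,|k+1\rangle\}$. Let $\theta_m=\arctan(c_{2m+1}/c_{2m})$, $\mu_m=\arctan(\sin2\theta_m)$, $\theta'_m=\arctan(c_{2m+2}/c_{2m+1})$, $\mu'_m=\arctan(\sin2\theta'_m)$. Questions: Alice $\{0,1,2\}$, Bob $\{0,1,2,3\}$; answers $\mathbb N$; ''outcome $a\leftrightarrow v$'' means the projector for $a$ is $|v\rangle\langle v|$; $m$ ranges over $\mathbb N$. Alice $x=0$: $a\leftrightarrow|a\rangle$; $x=1$: $2m,2m+1\leftrightarrow$ the $+1,-1$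 eigenvectors of $O_{2m}(\pi/2,+)$; $x=2$: $0\leftrightarrow|0\rangle$, $2m+1,2m+2\leftrightarrow$ the $+1,-1$ eigenvectors of $O_{2m+1}(\pi/2,+)$. Bob $y=0$ (resp. $1$): $2m,2m+1\leftrightarrow$ the $\pm1$ eigenvectors of $O_{2m}(\mu_m,+)$ (resp. $O_{2m}(\mu_m,-)$); $y=2$ (resp. $3$): $0\leftrightarrow|0\rangle$, $2m+1,2m+2\leftrightarrow$ the $\pm1$ eigenvectors of $O_{2m+1}(\mu'_m,+)$ (resp. $O_{2m+1}(\mu'_m,-)$). Then $p^*_\infty(a,b|x,y)=\langle\Psi_\infty|A^a_x\otimes B^b_y|\Psi_\infty\rangle$. A strategy: Hilbert spaces $\mathcal H_A,\mathcal H_B$, unit $|\psi\rangle\in\mathcal H_A\otimes\mathcal H_B$, projective measurements $\{A^a_x\}_a$, $\{B^b_y\}_b$ (possibly countably many outcomes), producing $p(a,b|x,y)=\langle\psi|A^a_x\otimes B^b_y|\psi\rangle$. $\mathcal C_{qs}^{3,4,\infty,\infty}$: correlations with question sets of sizes $3,4$ and answer sets $\mathbb N$ produced by some strategy (arbitrary Hilbert spaces, no Schmidt rank restriction). $\mathcal C_{q\le N}^{3,4,\infty,\infty}$: those produced by a strategy whose state has Schmidt rank at most $N$. Distance: $|p-p'|_{corr}:=\sup_{x,y}\sum_{a,b}|p(a,b|x,y)-p'(a,b|x,y)|$. *)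

From Stdlib Require Import Reals Lra Lia List Arith ClassicalEpsilon.
Import ListNotations.
Open Scope R_scope.

Record C := mkC { cre : R ; cim : R }.
Definition C0 : C := mkC 0 0.
Definition RtoC (r : R) : C := mkC r 0.
Definition Cadd (z w : C) : C := mkC (cre z + cre w) (cim z + cim w).
Definition Copp (z : C) : C := mkC (- cre z) (- cim z).
Definition Csub (z w : C) : C := Cadd z (Copp w).
Definition Cmul (z w : C) : C :=
  mkC (cre z * cre w - cim z * cim w) (cre z * cim w + cim z * cre w).
Definition Cscale (r : R) (z : C) : C := mkC (r * cre z) (r * cim z).
Definition Cconj (z : C) : C := mkC (cre z) (- cim z).
Definition Cnorm2 (z : C) : R := cre z * cre z + cim z * cim z.

Definition lsum {T : Type} (f : T -> C) (L : list T) : C :=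
  fold_right (fun x acc => Cadd (f x) acc) C0 L.
Definition rlsum {T : Type} (f : T -> R) (L : list T) : R :=
  fold_right (fun x acc => f x + acc) 0 L.

Definition has_sum {T : Type} (f : T -> C) (s : C) : Prop :=
  forall eps, 0 < eps -> exists L0 : list T,
    forall L, NoDup L -> incl L0 L -> Cnorm2 (Csub (lsum f L) s) < eps.

(* the value of the sum (unspecified if the family is not summable) *)
Definition tsum {T : Type} (f : T -> C) : C :=
  epsilon (inhabits C0) (fun s => has_sum f s).

(* The Hilbert space l^2(I) over an arbitrary index type I.
   (Every complex Hilbert space is unitarily isomorphic to some l^2(I),
   and H_A (x) H_B = l^2(IA) (x) l^2(IB) = l^2(IA * IB).)               *)
Definition l2 {T : Type} (v : T -> C) : Prop :=
  exists M, forall L, NoDup L -> rlsum (fun i => Cnorm2 (v i)) L <= M.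

Definition inner {T : Type} (u v : T -> C) : C :=
  tsum (fun i => Cmul (Cconj (u i)) (v i)).
Definition sqnorm {T : Type} (v : T -> C) : R := cre (inner v v).

Definition vadd {T : Type} (u v : T -> C) : T -> C := fun i => Cadd (u i) (v i).
Definition vsub {T : Type} (u v : T -> C) : T -> C := fun i => Csub (u i) (v i).
Definition vscale {T : Type} (c : C) (v : T -> C) : T -> C := fun i => Cmul c (v i).

(* operators (only their action on l^2 vectors matters) *)
Definition Op (T : Type) := (T -> C) -> (T -> C).

Definition is_projector {T : Type} (P : Op T) : Prop :=
  (forall v, l2 v -> l2 (P v)) /\
  (forall u v c, l2 u -> l2 v -> P (vadd u (vscale c v)) = vadd (P u) (vscale c (P v))) /\
  (forall v, l2 v -> P (P v) = P v) /\
  (forall u v, l2 u -> l2 v -> inner u (P v) = inner (P u) v).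

Definition psum_vec {T : Type} (A : nat -> Op T) (n : nat) (v : T -> C) : T -> C :=
  fun i => lsum (fun a => A a v i) (seq 0 n).

(* projective measurement with outcomes in nat: projectors summing to the
   identity in the strong operator topology *)
Definition is_PVM {T : Type} (A : nat -> Op T) : Prop :=
  (forall a, is_projector (A a)) /\
  (forall v, l2 v -> forall eps, 0 < eps -> exists n0, forall n, (n0 <= n)%nat ->
      sqnorm (vsub v (psum_vec A n v)) < eps).

(* (P (x) Q) psi on l^2(IA * IB) *)
Definition tens {IA IB : Type} (P : Op IA) (Q : Op IB) (psi : IA * IB -> C) : IA * IB -> C :=
  fun ij => P (fun i' => Q (fun j' => psi (i', j')) (snd ij)) (fst ij).

(* correlations: p a b x y = p(a,b|x,y); only x < 3, y < 4 are meaningful *)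
Definition corr := nat -> nat -> nat -> nat -> R.

Definition corr_of {IA IB : Type} (psi : IA * IB -> C)
  (A : nat -> nat -> Op IA) (B : nat -> nat -> Op IB) : corr :=
  fun a b x y => cre (inner psi (tens (A x a) (B y b) psi)).

Record strategy := mkStrat {
  IA : Type; IB : Type;
  st : IA * IB -> C;
  MA : nat -> nat -> Op IA;   (* MA x a = A^a_x *)
  MB : nat -> nat -> Op IB }. (* MB y b = B^b_y *)

Definition valid_strategy (S : strategy) : Prop :=
  l2 (st S) /\ sqnorm (st S) = 1 /\
  (forall x, (x < 3)%nat -> is_PVM (MA S x)) /\
  (forall y, (y < 4)%nat -> is_PVM (MB S y)).

Definition produces (S : strategy) (p : corr) : Prop :=
  forall a b x y, (x < 3)%nat -> (y < 4)%nat ->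
    p a b x y = corr_of (st S) (MA S) (MB S) a b x y.

Definition schmidt_rank_le {IA IB : Type} (N : nat) (psi : IA * IB -> C) : Prop :=
  exists (u : nat -> IA -> C) (v : nat -> IB -> C),
    (forall k, l2 (u k)) /\ (forall k, l2 (v k)) /\
    forall i j, psi (i, j) = lsum (fun k => Cmul (u k i) (v k j)) (seq 0 N).

Definition in_Cqs (p : corr) : Prop :=
  exists S, valid_strategy S /\ produces S p.

Definition in_CqN (N : nat) (p : corr) : Prop :=
  exists S, valid_strategy S /\ schmidt_rank_le N (st S) /\ produces S p.

Definition corr_dist_le (p q : corr) (delta : R) : Prop :=
  forall x y, (x < 3)%nat -> (y < 4)%nat -> forall n,
    rlsum (fun a => rlsum (fun b => Rabs (p a b x y - q a b x y)) (seq 0 n)) (seq 0 n)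
      <= delta.

Definition Cnorm_const : R :=
  / sqrt (cre (tsum (fun i : nat => RtoC (/ (INR (S i)) ^ 16)))).
Definition cc (i : nat) : R := Cnorm_const / (INR (S i)) ^ 8.

Definition theta (m : nat) : R := atan (cc (2 * m + 1) / cc (2 * m)).
Definition mu (m : nat) : R := atan (sin (2 * theta m)).
Definition theta' (m : nat) : R := atan (cc (2 * m + 2) / cc (2 * m + 1)).
Definition mu' (m : nat) : R := atan (sin (2 * theta' m)).

Definition Psi_inf (ij : nat * nat) : C :=
  if Nat.eqb (fst ij) (snd ij) then RtoC (cc (fst ij)) else C0.

Definition O_op (k : nat) (m : R) (s : R) : Op nat := fun v i =>
  if Nat.eqb i k then Cadd (Cscale (cos m) (v k)) (Cscale (s * sin m) (v (S k)))
  else if Nat.eqb i (S k) then Cadd (Cscale (s * sin m) (v k)) (Cscale (- cos m) (v (S k)))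
  else C0.

Definition Pi_op (k : nat) : Op nat := fun v i =>
  if orb (Nat.eqb i k) (Nat.eqb i (S k)) then v i else C0.

(* projector onto the eps-eigenvector (eps = +1 or -1) of O_k(mu,s):
   (Pi_k + eps O_k(mu,s)) / 2, i.e. |w><w| for the unit eps-eigenvector w *)
Definition eigproj (k : nat) (m s eps : R) : Op nat := fun v i =>
  Cscale (1 / 2) (Cadd (Pi_op k v i) (Cscale eps (O_op k m s v i))).

Definition ket_proj (a : nat) : Op nat := fun v i =>
  if Nat.eqb i a then v a else C0.

Definition sgn (a : nat) : R := if Nat.even a then 1 else -1.

Definition A_star (x a : nat) : Op nat :=
  match x with
  | O => ket_proj a
  | 1%nat => eigproj (2 * (a / 2)) (PI / 2) 1 (sgn a)
  | _ => match a with
         | O => ket_proj 0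
         | S a' => eigproj (2 * (a' / 2) + 1) (PI / 2) 1 (sgn a')
         end
  end.

Definition B_star (y b : nat) : Op nat :=
  match y with
  | O => eigproj (2 * (b / 2)) (mu (b / 2)) 1 (sgn b)
  | 1%nat => eigproj (2 * (b / 2)) (mu (b / 2)) (-1) (sgn b)
  | 2%nat => match b with
             | O => ket_proj 0
             | S b' => eigproj (2 * (b' / 2) + 1) (mu' (b' / 2)) 1 (sgn b')
             end
  | _ => match b with
         | O => ket_proj 0
         | S b' => eigproj (2 * (b' / 2) + 1) (mu' (b' / 2)) (-1) (sgn b')
         end
  end.

Definition pstar : corr := corr_of Psi_inf A_star B_star.

(* Membership in C_qs: the state sum_i c_i |ii> is normalised, and every
   measurement is a direct sum of projections acting on blocks of at most two
   consecutive basis vectors, so its partial sums converge strongly to the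
   identity because the tail of an l^2 vector becomes small.

   The lower bound only uses the question pair (0,0).  Write a Schmidt-rank-N
   state as sum_k e_k (x) w_k with (e_k) orthonormal.  Cauchy-Schwarz gives
   p(a,b|0,0) <= t_a s_b with t_a = sum_k |A_a e_k|^2, s_b = sum_k |B_b w_k|^2;
   by Bessel sum_a t_a <= N, and s_b is Bob's marginal probability of b.  In
   p*, Bob's answers 2m, 2m+1 co-occur only with Alice's answers 2m, 2m+1, and
   their total marginal is c_(2m)^2 + c_(2m+1)^2 = O(m^-16).  Summing
   p(a,b|0,0) over a in [2M, 4M) and b in the block of a therefore gives, up
   to delta, a mass of order M * M^-16 that is at most N (O(M^-16) + delta).
   With M of order delta^(-1/16) this forces N = Omega(delta^(-1/16)), which
   is stronger than the claimed exponent 1/32. *)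

From Stdlib Require Import Reals Lra Lia List ZArith ClassicalEpsilon
  FunctionalExtensionality Permutation.
Import ListNotations.
Open Scope R_scope.

Ltac decide_nat_tests := repeat match goal with
 | |- context [Nat.eqb ?x ?y] =>
     first [ replace (Nat.eqb x y) with true by (symmetry; apply Nat.eqb_eq; lia)
           | replace (Nat.eqb x y) with false by (symmetry; apply Nat.eqb_neq; lia) ]
 | |- context [Nat.leb ?x ?y] =>
     first [ replace (Nat.leb x y) with true by (symmetry; apply Nat.leb_le; lia)
           | replace (Nat.leb x y) with false by (symmetry; apply Nat.leb_gt; lia) ]
 | |- context [Nat.ltb ?x ?y] =>
     first [ replace (Nat.ltb x y) with true by (symmetry; apply Nat.ltb_lt; lia)
           | replace (Nat.ltb x y) with false by (symmetry; apply Nat.ltb_ge; lia) ]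
 end; cbn [andb orb].

Lemma C_ext z w : cre z = cre w -> cim z = cim w -> z = w.
Proof. destruct z, w; simpl; intros; subst; reflexivity. Qed.

Definition C1 : C := mkC 1 0.

Lemma C_ring_theory : ring_theory C0 C1 Cadd Cmul Csub Copp eq.
Proof. constructor; intros; apply C_ext; simpl; ring. Qed.
Add Ring C_ring : C_ring_theory.

Lemma Cconj_add z w : Cconj (Cadd z w) = Cadd (Cconj z) (Cconj w).
Proof. apply C_ext; simpl; ring. Qed.
Lemma Cconj_mul z w : Cconj (Cmul z w) = Cmul (Cconj z) (Cconj w).
Proof. apply C_ext; simpl; ring. Qed.
Lemma Cconj_0 : Cconj C0 = C0.
Proof. apply C_ext; simpl; ring. Qed.
Lemma Cscale_RtoC r z : Cscale r z = Cmul (RtoC r) z.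
Proof. apply C_ext; simpl; ring. Qed.
Lemma Cnorm2_nonneg z : 0 <= Cnorm2 z.
Proof. unfold Cnorm2; nra. Qed.
Lemma Cnorm2_mul z w : Cnorm2 (Cmul z w) = Cnorm2 z * Cnorm2 w.
Proof. unfold Cnorm2; simpl; ring. Qed.
Lemma Cnorm2_scale r z : Cnorm2 (Cscale r z) = r * r * Cnorm2 z.
Proof. unfold Cnorm2; simpl; ring. Qed.
Lemma Cnorm2_add_le z w : Cnorm2 (Cadd z w) <= 2 * Cnorm2 z + 2 * Cnorm2 w.
Proof.
  unfold Cnorm2; simpl.
  pose proof (Rle_0_sqr (cre z - cre w)); pose proof (Rle_0_sqr (cim z - cim w)).
  unfold Rsqr in *; nra.
Qed.
Lemma cre_sqr_le_Cnorm2 z : cre z * cre z <= Cnorm2 z.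
Proof. unfold Cnorm2; nra. Qed.

Lemma lsum_app {T} (f : T -> C) L1 L2 : lsum f (L1 ++ L2) = Cadd (lsum f L1) (lsum f L2).
Proof. induction L1; simpl. ring. rewrite IHL1; ring. Qed.
Lemma rlsum_app {T} (f : T -> R) L1 L2 : rlsum f (L1 ++ L2) = rlsum f L1 + rlsum f L2.
Proof. induction L1; simpl. ring. rewrite IHL1; ring. Qed.
Lemma cre_lsum {T} (f : T -> C) L : cre (lsum f L) = rlsum (fun x => cre (f x)) L.
Proof. induction L; simpl; auto. rewrite IHL; auto. Qed.
Lemma cim_lsum {T} (f : T -> C) L : cim (lsum f L) = rlsum (fun x => cim (f x)) L.
Proof. induction L; simpl; auto. rewrite IHL; auto. Qed.
Lemma lsum_ext {T} (f g : T -> C) L : (forall x, In x L -> f x = g x) -> lsum f L = lsum g L.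
Proof. induction L; simpl; intros; auto. rewrite H, IHL; auto. Qed.
Lemma rlsum_ext {T} (f g : T -> R) L : (forall x, In x L -> f x = g x) -> rlsum f L = rlsum g L.
Proof. induction L; simpl; intros; auto. rewrite H, IHL; auto. Qed.
Lemma lsum_add {T} (f g : T -> C) L :
  lsum (fun x => Cadd (f x) (g x)) L = Cadd (lsum f L) (lsum g L).
Proof. induction L; simpl. ring. rewrite IHL; ring. Qed.
Lemma lsum_mull {T} (f : T -> C) c L : lsum (fun x => Cmul c (f x)) L = Cmul c (lsum f L).
Proof. induction L; simpl. ring. rewrite IHL; ring. Qed.
Lemma lsum_mulr {T} (f : T -> C) c L : lsum (fun x => Cmul (f x) c) L = Cmul (lsum f L) c.
Proof. induction L; simpl. ring. rewrite IHL; ring. Qed.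
Lemma lsum_conj {T} (f : T -> C) L : Cconj (lsum f L) = lsum (fun x => Cconj (f x)) L.
Proof. induction L; simpl. apply Cconj_0. rewrite Cconj_add, IHL; auto. Qed.
Lemma lsum_zero {T} (L : list T) : lsum (fun _ => C0) L = C0.
Proof. induction L; simpl; auto. rewrite IHL; ring. Qed.
Lemma lsum_swap {T U} (f : T -> U -> C) L1 L2 :
  lsum (fun x => lsum (fun y => f x y) L2) L1 = lsum (fun y => lsum (fun x => f x y) L1) L2.
Proof. induction L1; simpl. rewrite lsum_zero; auto. rewrite IHL1, <- lsum_add; auto. Qed.
Lemma lsum_map {T U} (f : U -> C) (g : T -> U) L : lsum f (map g L) = lsum (fun x => f (g x)) L.
Proof. induction L; simpl; auto. rewrite IHL; auto. Qed.
Lemma rlsum_add {T} (f g : T -> R) L : rlsum (fun x => f x + g x) L = rlsum f L + rlsum g L.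
Proof. induction L; simpl. ring. rewrite IHL; ring. Qed.
Lemma rlsum_scal {T} (f : T -> R) c L : rlsum (fun x => c * f x) L = c * rlsum f L.
Proof. induction L; simpl. ring. rewrite IHL; ring. Qed.
Lemma rlsum_opp {T} (f : T -> R) L : rlsum (fun x => - f x) L = - rlsum f L.
Proof. induction L; simpl. ring. rewrite IHL; ring. Qed.
Lemma rlsum_zero {T} (L : list T) : rlsum (fun _ => 0) L = 0.
Proof. induction L; simpl; auto. rewrite IHL; ring. Qed.
Lemma rlsum_const {T} c (L : list T) : rlsum (fun _ => c) L = INR (length L) * c.
Proof.
  induction L as [|x L IH]; [simpl; ring|].
  unfold rlsum in *; simpl fold_right. rewrite IH.
  change (length (x :: L)) with (S (length L)). rewrite S_INR. ring.
Qed.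
Lemma rlsum_le {T} (f g : T -> R) L :
  (forall x, In x L -> f x <= g x) -> rlsum f L <= rlsum g L.
Proof.
  induction L; simpl; intros H. lra.
  assert (f a <= g a) by auto. assert (rlsum f L <= rlsum g L) by auto. lra.
Qed.
Lemma rlsum_nonneg {T} (f : T -> R) L : (forall x, In x L -> 0 <= f x) -> 0 <= rlsum f L.
Proof. intros. rewrite <- (rlsum_zero L). apply rlsum_le; auto. Qed.
Lemma rlsum_swap {T U} (f : T -> U -> R) L1 L2 :
  rlsum (fun x => rlsum (fun y => f x y) L2) L1 = rlsum (fun y => rlsum (fun x => f x y) L1) L2.
Proof. induction L1; simpl. rewrite rlsum_zero; auto. rewrite IHL1, <- rlsum_add; auto. Qed.
Lemma rlsum_filter {T} (P : T -> bool) (f : T -> R) L :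
  rlsum (fun i => if P i then f i else 0) L = rlsum f (filter P L).
Proof. induction L; simpl; auto. destruct (P a); simpl; rewrite IHL; ring. Qed.
Lemma rlsum_perm {T} (f : T -> R) L1 L2 : Permutation L1 L2 -> rlsum f L1 = rlsum f L2.
Proof. induction 1; simpl; lra. Qed.
Lemma lsum_perm {T} (f : T -> C) L1 L2 : Permutation L1 L2 -> lsum f L1 = lsum f L2.
Proof. induction 1; simpl; try congruence; ring. Qed.
Lemma rlsum_zero_out {T} (f : T -> R) L : (forall x, In x L -> f x = 0) -> rlsum f L = 0.
Proof. intros. rewrite (rlsum_ext f (fun _ => 0)); auto. apply rlsum_zero. Qed.
Lemma lsum_zero_out {T} (f : T -> C) L : (forall x, In x L -> f x = C0) -> lsum f L = C0.
Proof. intros. rewrite (lsum_ext f (fun _ => C0)); auto. apply lsum_zero. Qed.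

Lemma rlsum_seq_mono (f : nat -> R) n m : (forall a, 0 <= f a) -> (n <= m)%nat ->
  rlsum f (seq 0 n) <= rlsum f (seq 0 m).
Proof.
  intros Hf Hnm. replace m with (n + (m - n))%nat by lia. rewrite seq_app, rlsum_app.
  pose proof (rlsum_nonneg f (seq (0 + n) (m - n)) (fun x _ => Hf x)). lra.
Qed.

Lemma rlsum_const_from m k c :
  rlsum (fun a => if Nat.leb m a then c else 0) (seq 0 (m + k)) = INR k * c.
Proof.
  induction k.
  - rewrite Nat.add_0_r, Rmult_0_l. apply rlsum_zero_out. intros a Ha. apply in_seq in Ha.
    replace (Nat.leb m a) with false by (symmetry; apply Nat.leb_gt; lia). auto.
  - replace (m + S k)%nat with (S (m + k)) by lia. rewrite seq_S, rlsum_app, IHk, S_INR.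
    simpl. replace (Nat.leb m (m + k)) with true by (symmetry; apply Nat.leb_le; lia). ring.
Qed.

Lemma rlsum_prod {A B} (f : A -> R) (g : B -> R) L1 L2 :
  rlsum (fun p => f (fst p) * g (snd p)) (list_prod L1 L2) = rlsum f L1 * rlsum g L2.
Proof.
  induction L1; simpl. ring. rewrite rlsum_app, IHL1.
  assert (rlsum (fun p : A * B => f (fst p) * g (snd p)) (map (fun y => (a, y)) L2)
          = f a * rlsum g L2).
  { clear. induction L2; simpl. ring. rewrite IHL2. ring. }
  rewrite H. ring.
Qed.

Lemma rlsum_sym_prod (X Y : nat -> R) L :
  rlsum (fun k => rlsum (fun l => (X k * Y l + X l * Y k) / 2) L) L = rlsum X L * rlsum Y L.
Proof.
  rewrite (rlsum_ext _ (fun k => (/2 * rlsum Y L) * X k + (/2 * rlsum X L) * Y k)).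
  - rewrite rlsum_add, !rlsum_scal. field.
  - intros k _. rewrite (rlsum_ext _ (fun l => (/2 * X k) * Y l + (/2 * Y k) * X l)) by (intros; field).
    rewrite rlsum_add, !rlsum_scal. ring.
Qed.

(* Index types are arbitrary, so duplicates are removed with classical decidable equality. *)
Definition classic_eq_dec {T} (x y : T) : {x = y} + {x <> y} :=
  excluded_middle_informative (x = y).

Definition dedup {T} (L : list T) : list T := nodup classic_eq_dec L.

Lemma dedup_NoDup {T} (L : list T) : NoDup (dedup L).
Proof. apply NoDup_nodup. Qed.
Lemma dedup_In {T} (L : list T) x : In x (dedup L) <-> In x L.
Proof. apply nodup_In. Qed.
Lemma incl_dedup {T} (L : list T) : incl L (dedup L).
Proof. intros x Hx; apply dedup_In; auto. Qed.
Lemma incl_dedup_appl {T} (L1 L2 : list T) : incl L1 (dedup (L1 ++ L2)).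
Proof. intros x H. apply dedup_In, in_or_app; auto. Qed.
Lemma incl_dedup_appr {T} (L1 L2 : list T) : incl L2 (dedup (L1 ++ L2)).
Proof. intros x H. apply dedup_In, in_or_app; auto. Qed.

Lemma rlsum_in_remove {T} (f : T -> R) a L : (forall x, 0 <= f x) -> In a L ->
  f a + rlsum f (remove classic_eq_dec a L) <= rlsum f L.
Proof.
  intros Hf. induction L as [|b L IH]; simpl; intros H; [contradiction|].
  destruct (classic_eq_dec a b) as [<-|Hab].
  - assert (rlsum f (remove classic_eq_dec a L) <= rlsum f L).
    { clear IH H. induction L as [|c L IH]; simpl; [lra|].
      destruct (classic_eq_dec a c); simpl; specialize (Hf c); lra. }
    lra.
  - destruct H as [->|H]; [congruence|]. simpl. specialize (IH H). lra.
Qed.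

Lemma rlsum_incl_le {T} (f : T -> R) L1 L2 : (forall x, 0 <= f x) -> NoDup L1 -> incl L1 L2 ->
  rlsum f L1 <= rlsum f L2.
Proof.
  intros Hf H. revert L2. induction H as [|a L1 Ha HN IH]; intros L2 Hi; simpl.
  - apply rlsum_nonneg; auto.
  - assert (Hr : incl L1 (remove classic_eq_dec a L2)).
    { intros x Hx. apply in_in_remove. intros ->; contradiction. apply Hi; simpl; auto. }
    pose proof (IH _ Hr). pose proof (rlsum_in_remove f a L2 Hf (Hi a (or_introl eq_refl))). lra.
Qed.

Lemma NoDup_incl_split {T} (L0 L : list T) : NoDup L0 -> NoDup L -> incl L0 L ->
  exists L', Permutation L (L0 ++ L') /\ (forall x, In x L' -> ~ In x L0).
Proof.
  intros H0 H Hi. exists (filter (fun x => if in_dec classic_eq_dec x L0 then false else true) L).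
  split.
  - apply NoDup_Permutation; auto.
    + apply NoDup_app; auto. apply NoDup_filter; auto.
      intros x Hx Hx'. apply filter_In in Hx' as [_ Hx'].
      destruct (in_dec classic_eq_dec x L0); [discriminate|contradiction].
    + intros x; split; intros Hx.
      * apply in_or_app. destruct (in_dec classic_eq_dec x L0) eqn:E; auto.
        right. apply filter_In. rewrite E. auto.
      * apply in_app_or in Hx as [Hx|Hx]; auto. apply filter_In in Hx; tauto.
  - intros x Hx. apply filter_In in Hx as [_ Hx].
    destruct (in_dec classic_eq_dec x L0); [discriminate|auto].
Qed.

Lemma rlsum_support {T} (f : T -> R) L0 L : NoDup L0 -> NoDup L -> incl L0 L ->
  (forall x, ~ In x L0 -> f x = 0) -> rlsum f L = rlsum f L0.
Proof.
  intros H0 H Hi Hz. destruct (NoDup_incl_split L0 L H0 H Hi) as [L' [HP HL']].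
  rewrite (rlsum_perm f _ _ HP), rlsum_app, (rlsum_zero_out f L'); [ring|].
  intros; apply Hz; auto.
Qed.
Lemma lsum_support {T} (f : T -> C) L0 L : NoDup L0 -> NoDup L -> incl L0 L ->
  (forall x, ~ In x L0 -> f x = C0) -> lsum f L = lsum f L0.
Proof.
  intros H0 H Hi Hz. destruct (NoDup_incl_split L0 L H0 H Hi) as [L' [HP HL']].
  rewrite (lsum_perm f _ _ HP), lsum_app, (lsum_zero_out f L'); [ring|].
  intros; apply Hz; auto.
Qed.

Lemma lsum_kronecker (f : nat -> C) i n : (i < n)%nat ->
  lsum (fun j => if Nat.eqb i j then f j else C0) (seq 0 n) = f i.
Proof.
  intros H. rewrite (lsum_support _ [i] (seq 0 n)).
  - simpl. rewrite Nat.eqb_refl. ring.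
  - repeat constructor; auto.
  - apply seq_NoDup.
  - intros x [<-|[]]. apply in_seq; lia.
  - intros x Hx. destruct (Nat.eqb i x) eqn:E; auto.
    apply Nat.eqb_eq in E; subst. exfalso; apply Hx; simpl; auto.
Qed.

Lemma NoDup_list_prod {A B} (L1 : list A) (L2 : list B) :
  NoDup L1 -> NoDup L2 -> NoDup (list_prod L1 L2).
Proof.
  intros H1 H2. induction H1; simpl. constructor.
  apply NoDup_app; auto.
  - apply FinFun.Injective_map_NoDup; auto. intros u v E; inversion E; auto.
  - intros [a b] Ha Hb. apply in_map_iff in Ha as [y [E _]]. inversion E; subst.
    apply in_prod_iff in Hb. tauto.
Qed.

Lemma incl_list_prod_proj {A B} (L : list (A * B)) :
  incl L (list_prod (dedup (map fst L)) (dedup (map snd L))).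
Proof.
  intros [a b] H. apply in_prod_iff. split; apply dedup_In.
  - change a with (fst (a, b)); apply in_map; auto.
  - change b with (snd (a, b)); apply in_map; auto.
Qed.

Lemma incl_seq_list_max (L : list nat) : incl L (seq 0 (S (list_max L))).
Proof.
  intros x Hx. apply in_seq. pose proof (proj1 (list_max_le L (list_max L)) (le_n _)) as H.
  rewrite Forall_forall in H. specialize (H x Hx). lia.
Qed.

Definition rhas_sum {T} (f : T -> R) (s : R) : Prop :=
  forall eps, 0 < eps -> exists L0 : list T,
    forall L, NoDup L -> incl L0 L -> Rabs (rlsum f L - s) < eps.
Definition rbounded {T} (f : T -> R) : Prop :=
  exists M, forall L, NoDup L -> rlsum f L <= M.
Definition rabs_summable {T} (f : T -> R) : Prop := rbounded (fun x => Rabs (f x)).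

Lemma rhas_sum_unique {T} (f : T -> R) s t : rhas_sum f s -> rhas_sum f t -> s = t.
Proof.
  intros Hs Ht. destruct (Req_dec s t) as [|Hne]; auto. exfalso.
  assert (He : 0 < Rabs (s - t) / 2) by (pose proof (Rabs_pos_lt (s - t)); lra).
  destruct (Hs _ He) as [L0 H0], (Ht _ He) as [L1 H1].
  specialize (H0 _ (dedup_NoDup (L0 ++ L1)) (incl_dedup_appl _ _)).
  specialize (H1 _ (dedup_NoDup (L0 ++ L1)) (incl_dedup_appr _ _)).
  set (sL := rlsum f (dedup (L0 ++ L1))) in *.
  pose proof (Rabs_triang (sL - t) (s - sL)) as H.
  replace (sL - t + (s - sL)) with (s - t) in H by ring.
  rewrite Rabs_minus_sym in H0. lra.
Qed.

Lemma rhas_sum_ext {T} (f g : T -> R) s : (forall x, f x = g x) -> rhas_sum f s -> rhas_sum g s.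
Proof. intros E. replace g with f; auto. apply functional_extensionality; auto. Qed.

Lemma rhas_sum_add {T} (f g : T -> R) s t : rhas_sum f s -> rhas_sum g t ->
  rhas_sum (fun x => f x + g x) (s + t).
Proof.
  intros Hs Ht eps He.
  destruct (Hs (eps / 2)) as [L0 H0]; [lra|]. destruct (Ht (eps / 2)) as [L1 H1]; [lra|].
  exists (L0 ++ L1). intros L HL Hi. apply incl_app_inv in Hi as [Hi0 Hi1].
  specialize (H0 L HL Hi0); specialize (H1 L HL Hi1).
  rewrite rlsum_add.
  pose proof (Rabs_triang (rlsum f L - s) (rlsum g L - t)).
  replace (rlsum f L + rlsum g L - (s + t)) with ((rlsum f L - s) + (rlsum g L - t)) by ring.
  lra.
Qed.

Lemma rhas_sum_scal {T} (f : T -> R) c s : rhas_sum f s -> rhas_sum (fun x => c * f x) (c * s).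
Proof.
  intros Hs eps He.
  destruct (Hs (eps / (Rabs c + 1))) as [L0 H0].
  { apply Rdiv_lt_0_compat; auto. pose proof (Rabs_pos c); lra. }
  exists L0; intros L HL Hi. specialize (H0 L HL Hi).
  rewrite rlsum_scal. replace (c * rlsum f L - c * s) with (c * (rlsum f L - s)) by ring.
  rewrite Rabs_mult.
  pose proof (Rabs_pos c). pose proof (Rabs_pos (rlsum f L - s)).
  apply Rmult_lt_compat_r with (r := Rabs c + 1) in H0; [|lra].
  unfold Rdiv in H0. rewrite Rmult_assoc, Rinv_l, Rmult_1_r in H0 by lra.
  nra.
Qed.

Lemma rhas_sum_sub {T} (f g : T -> R) s t : rhas_sum f s -> rhas_sum g t ->
  rhas_sum (fun x => f x - g x) (s - t).
Proof.
  intros Hs Ht. pose proof (rhas_sum_add _ _ _ _ Hs (rhas_sum_scal _ (-1) _ Ht)) as H.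
  replace (s - t) with (s + -1 * t) by ring.
  eapply rhas_sum_ext; [|exact H]. intros; simpl; ring.
Qed.

Lemma rhas_sum_zero {T} : rhas_sum (fun _ : T => 0) 0.
Proof. intros eps He. exists []. intros. rewrite rlsum_zero, Rminus_0_r, Rabs_R0; auto. Qed.

Lemma rhas_sum_finite {T} (f : T -> R) L0 : NoDup L0 -> (forall x, ~ In x L0 -> f x = 0) ->
  rhas_sum f (rlsum f L0).
Proof.
  intros H0 Hz eps He. exists L0. intros L HL Hi.
  rewrite (rlsum_support f L0 L), Rminus_diag, Rabs_R0 by auto. auto.
Qed.

Lemma rhas_sum_le_bound {T} (f : T -> R) s M : rhas_sum f s -> (forall L, NoDup L -> rlsum f L <= M) -> s <= M.
Proof.
  intros Hs HM. apply Rnot_lt_le; intro Hlt.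
  destruct (Hs (s - M)) as [L0 H0]; [lra|].
  specialize (H0 _ (dedup_NoDup L0) (incl_dedup L0)). specialize (HM _ (dedup_NoDup L0)).
  rewrite Rabs_minus_sym, Rabs_right in H0 by lra. lra.
Qed.

Lemma rhas_sum_mul_le {T} (f : T -> R) s c u : rhas_sum f s -> 0 <= c ->
  (forall L, NoDup L -> rlsum f L * c <= u) -> s * c <= u.
Proof.
  intros Hs Hc Hu. destruct (Rle_lt_or_eq_dec 0 c Hc) as [Hcp|<-].
  - assert (Hsu : s <= u / c).
    { apply (rhas_sum_le_bound f s (u / c) Hs). intros L HL. specialize (Hu L HL).
      apply (Rmult_le_reg_r c); auto. unfold Rdiv. rewrite Rmult_assoc, Rinv_l; lra. }
    apply (Rmult_le_compat_r c) in Hsu; auto. unfold Rdiv in Hsu.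
    rewrite Rmult_assoc, Rinv_l in Hsu; lra.
  - specialize (Hu [] (NoDup_nil _)). simpl in Hu. lra.
Qed.

Section NonnegSums.
Context {T : Type} (f : T -> R) (Hf : forall x, 0 <= f x).

(* The sum is the supremum of the finite sums. *)
Lemma rhas_sum_of_rbounded : rbounded f -> exists s, rhas_sum f s.
Proof.
  intros [M HM].
  set (E := fun r => exists L, NoDup L /\ r = rlsum f L).
  assert (Hb : bound E) by (exists M; intros r [L [HL ->]]; auto).
  assert (Hne : exists r, E r) by (exists 0, []; split; [constructor|auto]).
  destruct (completeness E Hb Hne) as [s [Hub Hlub]].
  exists s. intros eps He.
  assert (exists L, NoDup L /\ rlsum f L > s - eps) as [L0 [HL0 Hgt]].
  { apply NNPP. intro Hn. assert (Hupper : is_upper_bound E (s - eps)).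
    { intros r [L [HL ->]]. apply Rnot_lt_le. intro. apply Hn. exists L; auto. }
    specialize (Hlub _ Hupper). lra. }
  exists L0. intros L HL Hi.
  assert (rlsum f L0 <= rlsum f L) by (apply rlsum_incl_le; auto).
  assert (rlsum f L <= s) by (apply Hub; exists L; auto).
  rewrite Rabs_left1 by lra. lra.
Qed.

Lemma rhas_sum_ge_rlsum s L : rhas_sum f s -> NoDup L -> rlsum f L <= s.
Proof.
  intros Hs HL. apply Rnot_lt_le; intro Hlt.
  destruct (Hs (rlsum f L - s)) as [L0 H0]; [lra|].
  specialize (H0 _ (dedup_NoDup (L0 ++ L)) (incl_dedup_appl _ _)).
  assert (rlsum f L <= rlsum f (dedup (L0 ++ L))) by (apply rlsum_incl_le; auto; apply incl_dedup_appr).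
  rewrite Rabs_right in H0 by lra. lra.
Qed.

Lemma rhas_sum_nonneg s : rhas_sum f s -> 0 <= s.
Proof. intros Hs. apply (rhas_sum_ge_rlsum s [] Hs). constructor. Qed.

Lemma rhas_sum_term_le s x : rhas_sum f s -> f x <= s.
Proof.
  intros Hs. pose proof (rhas_sum_ge_rlsum s [x] Hs) as H. simpl in H.
  assert (f x + 0 <= s) by (apply H; repeat constructor; auto). lra.
Qed.

End NonnegSums.

Lemma rhas_sum_prod_nonneg {A B} (f : A -> R) (g : B -> R) s t :
  (forall x, 0 <= f x) -> (forall y, 0 <= g y) -> rhas_sum f s -> rhas_sum g t ->
  rhas_sum (fun p => f (fst p) * g (snd p)) (s * t).
Proof.
  intros Hf Hg Hs Ht.
  set (h := fun p : A * B => f (fst p) * g (snd p)).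
  assert (Hh : forall p, 0 <= h p) by (intros; apply Rmult_le_pos; auto).
  assert (Hprod : forall L1 L2, NoDup L1 -> NoDup L2 ->
    rlsum f L1 * rlsum g L2 = rlsum h (list_prod L1 L2)) by (intros; unfold h; rewrite rlsum_prod; auto).
  assert (Hbound : forall L, NoDup L -> rlsum h L <= s * t).
  { intros L HL. eapply Rle_trans; [apply (rlsum_incl_le h _ _ Hh HL (incl_list_prod_proj L))|].
    rewrite <- Hprod by apply dedup_NoDup.
    apply Rmult_le_compat; try (apply rlsum_nonneg; auto);
      apply rhas_sum_ge_rlsum; auto; apply dedup_NoDup. }
  destruct (rhas_sum_of_rbounded h Hh) as [u Hu]; [exists (s * t); auto|].
  replace (s * t) with u; auto.
  apply Rle_antisym; [apply (rhas_sum_le_bound h u); auto|].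
  apply (rhas_sum_mul_le f); auto; [apply (rhas_sum_nonneg g Hg t Ht)|].
  intros L1 HL1. rewrite Rmult_comm.
  apply (rhas_sum_mul_le g); auto; [apply rlsum_nonneg; auto|].
  intros L2 HL2. rewrite Rmult_comm, Hprod by auto.
  apply (rhas_sum_ge_rlsum h Hh); auto. apply NoDup_list_prod; auto.
Qed.

Definition rpos (x : R) : R := Rmax x 0.

Lemma rpos_nonneg x : 0 <= rpos x.
Proof. apply Rmax_r. Qed.

Lemma rpos_sub_rpos_opp x : rpos x - rpos (- x) = x.
Proof. unfold rpos, Rmax. destruct (Rle_dec x 0), (Rle_dec (- x) 0); lra. Qed.

Lemma rpos_le_Rabs x : rpos x <= Rabs x.
Proof. unfold rpos, Rmax. destruct (Rle_dec x 0); [apply Rabs_pos|rewrite Rabs_right; lra]. Qed.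

Lemma rabs_summable_parts {T} (f : T -> R) : rabs_summable f ->
  exists s1 s2, rhas_sum (fun x => rpos (f x)) s1 /\ rhas_sum (fun x => rpos (- f x)) s2.
Proof.
  intros [M HM].
  assert (Hpart : forall h : T -> R, (forall x, Rabs (h x) = Rabs (f x)) ->
            exists s, rhas_sum (fun x => rpos (h x)) s).
  { intros h Eh. apply rhas_sum_of_rbounded; [intros; apply rpos_nonneg|].
    exists M. intros L HL. eapply Rle_trans; [|apply (HM L HL)].
    apply rlsum_le. intros x _. rewrite <- Eh. apply rpos_le_Rabs. }
  destruct (Hpart f) as [s1 H1]; [auto|].
  destruct (Hpart (fun x => - f x)) as [s2 H2]; [intros; apply Rabs_Ropp|].
  exists s1, s2; auto.
Qed.

Lemma rabs_summable_summable {T} (f : T -> R) : rabs_summable f -> exists s, rhas_sum f s.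
Proof.
  intros Hf. destruct (rabs_summable_parts f Hf) as [s1 [s2 [H1 H2]]]. exists (s1 - s2).
  eapply rhas_sum_ext; [|exact (rhas_sum_sub _ _ _ _ H1 H2)]. intros; apply rpos_sub_rpos_opp.
Qed.

Lemma rabs_summable_le {T} (f g : T -> R) :
  (forall x, Rabs (f x) <= g x) -> rbounded g -> rabs_summable f.
Proof.
  intros H [M HM]. exists M. intros L HL. eapply Rle_trans; [|apply (HM L HL)].
  apply rlsum_le; auto.
Qed.

Lemma rbounded_add {T} (f g : T -> R) : rbounded f -> rbounded g -> rbounded (fun x => f x + g x).
Proof.
  intros [M1 H1] [M2 H2]. exists (M1 + M2). intros L HL. rewrite rlsum_add.
  specialize (H1 L HL); specialize (H2 L HL); lra.
Qed.

(* Fubini for absolutely summable families: split both factors into positive and negative parts. *)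
Lemma rhas_sum_prod {A B} (f : A -> R) (g : B -> R) s t :
  rabs_summable f -> rabs_summable g -> rhas_sum f s -> rhas_sum g t ->
  rhas_sum (fun p => f (fst p) * g (snd p)) (s * t).
Proof.
  intros Af Ag Hs Ht.
  destruct (rabs_summable_parts f Af) as [s1 [s2 [P1 N1]]].
  destruct (rabs_summable_parts g Ag) as [t1 [t2 [P2 N2]]].
  assert (Es : s = s1 - s2).
  { apply (rhas_sum_unique f); auto. eapply rhas_sum_ext; [|exact (rhas_sum_sub _ _ _ _ P1 N1)].
    intros; apply rpos_sub_rpos_opp. }
  assert (Et : t = t1 - t2).
  { apply (rhas_sum_unique g); auto. eapply rhas_sum_ext; [|exact (rhas_sum_sub _ _ _ _ P2 N2)].
    intros; apply rpos_sub_rpos_opp. }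
  pose proof (fun x => rpos_nonneg (f x)) as F1. pose proof (fun x => rpos_nonneg (- f x)) as F2.
  pose proof (fun x => rpos_nonneg (g x)) as G1. pose proof (fun x => rpos_nonneg (- g x)) as G2.
  pose proof (rhas_sum_prod_nonneg _ _ _ _ F1 G1 P1 P2) as Q1.
  pose proof (rhas_sum_prod_nonneg _ _ _ _ F1 G2 P1 N2) as Q2.
  pose proof (rhas_sum_prod_nonneg _ _ _ _ F2 G1 N1 P2) as Q3.
  pose proof (rhas_sum_prod_nonneg _ _ _ _ F2 G2 N1 N2) as Q4.
  pose proof (rhas_sum_add _ _ _ _ (rhas_sum_sub _ _ _ _ Q1 Q2) (rhas_sum_sub _ _ _ _ Q4 Q3)) as Q.
  replace (s * t) with (s1 * t1 - s1 * t2 + (s2 * t2 - s2 * t1)) by (subst; ring).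
  eapply rhas_sum_ext; [|exact Q]. intros [a b]; simpl.
  transitivity ((rpos (f a) - rpos (- f a)) * (rpos (g b) - rpos (- g b))); [ring|].
  now rewrite !rpos_sub_rpos_opp.
Qed.

Lemma Rabs_lt_of_sqr_sum a b e : 0 < e -> a * a + b * b < e * e -> Rabs a < e /\ Rabs b < e.
Proof. intros; split; apply Rabs_def1; nra. Qed.

Lemma has_sum_iff {T} (f : T -> C) s :
  has_sum f s <-> rhas_sum (fun x => cre (f x)) (cre s) /\ rhas_sum (fun x => cim (f x)) (cim s).
Proof.
  split.
  - intros H. split; intros eps He; destruct (H (eps * eps)) as [L0 H0]; try nra;
      exists L0; intros L HL Hi; specialize (H0 L HL Hi);
      unfold Cnorm2, Csub, Cadd, Copp in H0; simpl in H0;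
      rewrite ?cre_lsum, ?cim_lsum in H0;
      destruct (Rabs_lt_of_sqr_sum _ _ _ He H0); unfold Rminus; assumption.
  - intros [H1 H2] eps He.
    set (eta := Rmin 1 (eps / 2)).
    assert (0 < eta) by (apply Rmin_pos; lra).
    assert (eta <= 1) by apply Rmin_l. assert (eta <= eps / 2) by apply Rmin_r.
    destruct (H1 eta) as [L1 G1], (H2 eta) as [L2 G2]; auto.
    exists (L1 ++ L2). intros L HL Hi. apply incl_app_inv in Hi as [Hi1 Hi2].
    specialize (G1 L HL Hi1); specialize (G2 L HL Hi2).
    unfold Cnorm2, Csub, Cadd, Copp; simpl. rewrite cre_lsum, cim_lsum.
    apply Rabs_def2 in G1; apply Rabs_def2 in G2. nra.
Qed.

Lemma has_sum_unique {T} (f : T -> C) s t : has_sum f s -> has_sum f t -> s = t.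
Proof.
  rewrite !has_sum_iff. intros [Hs1 Hs2] [Ht1 Ht2].
  apply C_ext; [apply (rhas_sum_unique (fun x => cre (f x)))|apply (rhas_sum_unique (fun x => cim (f x)))];
    assumption.
Qed.

Lemma tsum_eq {T} (f : T -> C) s : has_sum f s -> tsum f = s.
Proof. intros H. apply (has_sum_unique f); auto. unfold tsum. apply epsilon_spec. exists s; auto. Qed.

Lemma has_sum_ext {T} (f g : T -> C) s : (forall x, f x = g x) -> has_sum f s -> has_sum g s.
Proof. intros E. replace g with f; auto. apply functional_extensionality; auto. Qed.

Lemma has_sum_add {T} (f g : T -> C) s t : has_sum f s -> has_sum g t ->
  has_sum (fun x => Cadd (f x) (g x)) (Cadd s t).
Proof. rewrite !has_sum_iff. intros [H1 H2] [H3 H4]. split; apply rhas_sum_add; auto. Qed.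

Lemma has_sum_mul {T} (f : T -> C) c s : has_sum f s -> has_sum (fun x => Cmul c (f x)) (Cmul c s).
Proof.
  rewrite !has_sum_iff. intros [H1 H2]. simpl. split.
  - apply rhas_sum_sub; apply rhas_sum_scal; auto.
  - apply rhas_sum_add; apply rhas_sum_scal; auto.
Qed.

Lemma has_sum_zero {T} : has_sum (fun _ : T => C0) C0.
Proof. apply has_sum_iff; split; apply rhas_sum_zero. Qed.

Lemma has_sum_lsum {T I} (f : I -> T -> C) s L : (forall k, In k L -> has_sum (f k) (s k)) ->
  has_sum (fun x => lsum (fun k => f k x) L) (lsum s L).
Proof. induction L; simpl; intros H. apply has_sum_zero. apply has_sum_add; auto. Qed.

Lemma has_sum_finite {T} (f : T -> C) L0 : NoDup L0 -> (forall x, ~ In x L0 -> f x = C0) ->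
  has_sum f (lsum f L0).
Proof.
  intros H0 Hz. apply has_sum_iff. rewrite cre_lsum, cim_lsum.
  split; apply rhas_sum_finite; auto; intros x Hx; rewrite (Hz x Hx); reflexivity.
Qed.

Definition cabs_summable {T} (f : T -> C) : Prop :=
  rabs_summable (fun x => cre (f x)) /\ rabs_summable (fun x => cim (f x)).

Lemma cabs_summable_summable {T} (f : T -> C) : cabs_summable f -> exists s, has_sum f s.
Proof.
  intros [H1 H2].
  destruct (rabs_summable_summable _ H1) as [a Ha], (rabs_summable_summable _ H2) as [b Hb].
  exists (mkC a b). apply has_sum_iff; auto.
Qed.

Lemma has_sum_prod {A B} (f : A -> C) (g : B -> C) s t :
  cabs_summable f -> cabs_summable g -> has_sum f s -> has_sum g t ->
  has_sum (fun p => Cmul (f (fst p)) (g (snd p))) (Cmul s t).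
Proof.
  intros [Af1 Af2] [Ag1 Ag2] Hs Ht. apply has_sum_iff in Hs as [S1 S2], Ht as [T1 T2].
  apply has_sum_iff; simpl; split.
  - apply rhas_sum_sub; apply (rhas_sum_prod (fun x => _ (f x)) (fun y => _ (g y))); auto.
  - apply rhas_sum_add; apply (rhas_sum_prod (fun x => _ (f x)) (fun y => _ (g y))); auto.
Qed.

(** * The Hilbert space l^2 *)

Lemma l2_zero {T} : l2 (fun _ : T => C0).
Proof.
  exists 0. intros L _. rewrite rlsum_zero_out; [lra|]. intros; unfold Cnorm2; simpl; ring.
Qed.

Lemma l2_ext {T} (u v : T -> C) : (forall i, u i = v i) -> l2 u -> l2 v.
Proof. intros E. replace v with u; auto. apply functional_extensionality; auto. Qed.

Lemma l2_add {T} (u v : T -> C) : l2 u -> l2 v -> l2 (vadd u v).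
Proof.
  intros [M1 H1] [M2 H2]. exists (2 * M1 + 2 * M2). intros L HL.
  eapply Rle_trans; [apply (rlsum_le _ (fun i => 2 * Cnorm2 (u i) + 2 * Cnorm2 (v i)))|].
  - intros; apply Cnorm2_add_le.
  - rewrite rlsum_add, !rlsum_scal. specialize (H1 L HL); specialize (H2 L HL). lra.
Qed.

Lemma l2_scale {T} (u : T -> C) c : l2 u -> l2 (vscale c u).
Proof.
  intros [M H]. exists (Cnorm2 c * M). intros L HL. unfold vscale.
  rewrite (rlsum_ext _ (fun i => Cnorm2 c * Cnorm2 (u i))) by (intros; apply Cnorm2_mul).
  rewrite rlsum_scal. specialize (H L HL). pose proof (Cnorm2_nonneg c). nra.
Qed.

Lemma l2_lincomb {T} (u v : T -> C) c : l2 u -> l2 v -> l2 (vadd u (vscale c v)).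
Proof. intros; apply l2_add; auto; apply l2_scale; auto. Qed.

Lemma l2_lsum {T I} (c : I -> C) (f : I -> T -> C) L : (forall k, In k L -> l2 (f k)) ->
  l2 (fun x => lsum (fun k => Cmul (c k) (f k x)) L).
Proof.
  induction L; simpl; intros H. apply l2_zero.
  apply (l2_ext (vadd (vscale (c a) (f a)) (fun x => lsum (fun k => Cmul (c k) (f k x)) L))).
  - intros; reflexivity.
  - apply l2_add; auto. apply l2_scale; auto.
Qed.

Lemma l2_finite (v : nat -> C) L0 : NoDup L0 -> (forall i, ~ In i L0 -> v i = C0) -> l2 v.
Proof.
  intros H0 Hz. exists (rlsum (fun i => Cnorm2 (v i)) L0). intros L HL.
  eapply Rle_trans.
  - apply (rlsum_incl_le _ L (dedup (L ++ L0))); auto using Cnorm2_nonneg, incl_dedup_appl.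
  - rewrite (rlsum_support _ L0 (dedup (L ++ L0))); auto using dedup_NoDup, incl_dedup_appr; [lra|].
    intros x Hx. rewrite Hz; auto. unfold Cnorm2; simpl; ring.
Qed.

Lemma cabs_summable_inner {T} (u v : T -> C) : l2 u -> l2 v ->
  cabs_summable (fun i => Cmul (Cconj (u i)) (v i)).
Proof.
  intros Hu Hv. assert (B : rbounded (fun i => Cnorm2 (u i) + Cnorm2 (v i))) by (apply rbounded_add; auto).
  split; (eapply rabs_summable_le; [|exact B]); intros i; unfold Cnorm2; simpl;
  destruct (u i) as [a b], (v i) as [c d]; simpl; apply Rabs_le;
  pose proof (Rle_0_sqr (a - c)); pose proof (Rle_0_sqr (a + c));
  pose proof (Rle_0_sqr (b - d)); pose proof (Rle_0_sqr (b + d));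
  pose proof (Rle_0_sqr (a - d)); pose proof (Rle_0_sqr (a + d));
  pose proof (Rle_0_sqr (b - c)); pose proof (Rle_0_sqr (b + c));
  unfold Rsqr in *; lra.
Qed.

Lemma inner_has_sum {T} (u v : T -> C) : l2 u -> l2 v ->
  has_sum (fun i => Cmul (Cconj (u i)) (v i)) (inner u v).
Proof.
  intros Hu Hv. destruct (cabs_summable_summable _ (cabs_summable_inner u v Hu Hv)) as [s Hs].
  unfold inner. rewrite (tsum_eq _ s); auto.
Qed.

Lemma inner_lin_r {T} (u v w : T -> C) c : l2 u -> l2 v -> l2 w ->
  inner u (vadd v (vscale c w)) = Cadd (inner u v) (Cmul c (inner u w)).
Proof.
  intros Hu Hv Hw. apply tsum_eq.
  eapply has_sum_ext;
    [|apply (has_sum_add _ _ _ _ (inner_has_sum u v Hu Hv) (has_sum_mul _ c _ (inner_has_sum u w Hu Hw)))].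
  intros; unfold vadd, vscale; simpl; ring.
Qed.

Lemma inner_scale_r {T} (u v : T -> C) c : l2 u -> l2 v -> inner u (vscale c v) = Cmul c (inner u v).
Proof.
  intros Hu Hv. apply tsum_eq. eapply has_sum_ext; [|apply (has_sum_mul _ c _ (inner_has_sum u v Hu Hv))].
  intros; unfold vscale; simpl; ring.
Qed.

Lemma inner_lsum_r {T} (u : T -> C) (c : nat -> C) (f : nat -> T -> C) L : l2 u -> (forall j, l2 (f j)) ->
  inner u (fun x => lsum (fun j => Cmul (c j) (f j x)) L) = lsum (fun j => Cmul (c j) (inner u (f j))) L.
Proof.
  intros Hu Hf. apply tsum_eq.
  eapply has_sum_ext; [|apply (has_sum_lsum (fun j x => Cmul (c j) (Cmul (Cconj (u x)) (f j x))))].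
  - intros; simpl. rewrite <- lsum_mull. apply lsum_ext; intros; ring.
  - intros; apply has_sum_mul, inner_has_sum; auto.
Qed.

Lemma inner_conj {T} (u v : T -> C) : l2 u -> l2 v -> inner v u = Cconj (inner u v).
Proof.
  intros Hu Hv. apply tsum_eq. pose proof (inner_has_sum u v Hu Hv) as H.
  apply has_sum_iff in H as [H1 H2]. apply has_sum_iff. simpl. split.
  - eapply rhas_sum_ext; [|exact H1]. intros; simpl; ring.
  - replace (- cim (inner u v)) with (-1 * cim (inner u v)) by ring.
    eapply rhas_sum_ext; [|exact (rhas_sum_scal _ (-1) _ H2)]. intros; simpl; ring.
Qed.

Lemma inner_lin_l {T} (u v w : T -> C) c : l2 u -> l2 v -> l2 w ->
  inner (vadd v (vscale c w)) u = Cadd (inner v u) (Cmul (Cconj c) (inner w u)).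
Proof.
  intros Hu Hv Hw. rewrite inner_conj, inner_lin_r by (auto; apply l2_lincomb; auto).
  rewrite Cconj_add, Cconj_mul, <- !inner_conj by auto. reflexivity.
Qed.

Lemma inner_scale_l {T} (u v : T -> C) c : l2 u -> l2 v -> inner (vscale c v) u = Cmul (Cconj c) (inner v u).
Proof.
  intros Hu Hv. rewrite inner_conj, inner_scale_r, Cconj_mul, <- inner_conj by (auto; apply l2_scale; auto).
  auto.
Qed.

Lemma inner_self_has_sum {T} (u : T -> C) : l2 u ->
  rhas_sum (fun i => Cnorm2 (u i)) (sqnorm u) /\ cim (inner u u) = 0.
Proof.
  intros Hu. pose proof (inner_has_sum u u Hu Hu) as H. apply has_sum_iff in H as [H1 H2].
  split.
  - eapply rhas_sum_ext; [|exact H1]. intros; unfold Cnorm2; simpl; ring.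
  - apply (rhas_sum_unique (fun x => cim (Cmul (Cconj (u x)) (u x)))); auto.
    eapply rhas_sum_ext; [|exact (@rhas_sum_zero T)]. intros; simpl; ring.
Qed.

Lemma sqnorm_nonneg {T} (u : T -> C) : l2 u -> 0 <= sqnorm u.
Proof.
  intros Hu. apply (rhas_sum_nonneg _ (fun i => Cnorm2_nonneg (u i))), (inner_self_has_sum u Hu).
Qed.

Lemma inner_self {T} (u : T -> C) : l2 u -> inner u u = RtoC (sqnorm u).
Proof. intros Hu. apply C_ext; simpl; [reflexivity|apply (inner_self_has_sum u Hu)]. Qed.

Lemma sqnorm_eq0 {T} (u : T -> C) : l2 u -> sqnorm u = 0 -> forall i, u i = C0.
Proof.
  intros Hu H0 i. destruct (inner_self_has_sum u Hu) as [H _].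
  pose proof (rhas_sum_term_le _ (fun i => Cnorm2_nonneg (u i)) _ i H) as Hi. rewrite H0 in Hi.
  unfold Cnorm2 in Hi. apply C_ext; simpl; nra.
Qed.

(* The quadratic t |-> |v - t <u,v> u|^2 is nonnegative. *)
Lemma cauchy_schwarz {T} (u v : T -> C) : l2 u -> l2 v -> Cnorm2 (inner u v) <= sqnorm u * sqnorm v.
Proof.
  intros Hu Hv. set (z := inner u v). set (A := sqnorm u). set (B := sqnorm v).
  assert (Key : forall t, 0 <= B - 2 * t * Cnorm2 z + t * t * Cnorm2 z * A).
  { intros t. set (c := Cmul (RtoC (- t)) z).
    pose proof (sqnorm_nonneg (vadd v (vscale c u)) (l2_lincomb _ _ _ Hv Hu)) as H.
    unfold sqnorm in H. rewrite inner_lin_l, !inner_lin_r in H by (auto; apply l2_lincomb; auto).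
    rewrite (inner_self u), (inner_self v), (inner_conj u v) in H by auto. fold z A B in H.
    unfold c in H. unfold Cnorm2; destruct z as [zr zi]; simpl in *. nra. }
  assert (HA : 0 <= A) by apply (sqnorm_nonneg u Hu).
  assert (HB : 0 <= B) by apply (sqnorm_nonneg v Hv).
  assert (Hz : 0 <= Cnorm2 z) by apply Cnorm2_nonneg.
  destruct (Rle_lt_or_eq_dec 0 A HA) as [HAp|<-].
  - specialize (Key (/ A)).
    replace (B - 2 * / A * Cnorm2 z + / A * / A * Cnorm2 z * A) with (B - Cnorm2 z / A) in Key
      by (field; lra).
    assert (HBA : Cnorm2 z / A * A <= B * A) by (apply Rmult_le_compat_r; lra).
    unfold Rdiv in HBA. rewrite Rmult_assoc, Rinv_l, Rmult_1_r in HBA by lra. lra.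
  - destruct (Rle_lt_or_eq_dec 0 (Cnorm2 z) Hz) as [Hzp|<-]; [|lra].
    specialize (Key ((B + 1) / Cnorm2 z)).
    replace (2 * ((B + 1) / Cnorm2 z) * Cnorm2 z) with (2 * (B + 1)) in Key by (field; lra).
    lra.
Qed.

Lemma Un_cv_const c : Un_cv (fun _ => c) c.
Proof. intros eps He. exists 0%nat. intros. unfold Rdist. rewrite Rminus_diag, Rabs_R0. lra. Qed.

Lemma Un_cv_rlsum {I} (L : list I) (x : I -> nat -> R) (l : I -> R) :
  (forall i, In i L -> Un_cv (x i) (l i)) -> Un_cv (fun n => rlsum (fun i => x i n) L) (rlsum l L).
Proof.
  induction L as [|i L IH]; simpl; intros H; [apply Un_cv_const|].
  apply CV_plus; auto.
Qed.

Definition Ccv (x : nat -> C) (l : C) : Prop :=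
  Un_cv (fun n => cre (x n)) (cre l) /\ Un_cv (fun n => cim (x n)) (cim l).

Lemma Ccv_of_Cnorm2 (x : nat -> C) l :
  (forall eps, 0 < eps -> exists n0, forall n, (n0 <= n)%nat -> Cnorm2 (Csub l (x n)) < eps) ->
  Ccv x l.
Proof.
  intros H; split; intros eps He; destruct (H (eps * eps)) as [n0 Hn0]; try nra;
    exists n0; intros n Hn; specialize (Hn0 n Hn); unfold Cnorm2 in Hn0; simpl in Hn0;
    unfold Rdist; rewrite Rabs_minus_sym; unfold Rminus;
    destruct (Rabs_lt_of_sqr_sum _ _ _ He Hn0); assumption.
Qed.

Lemma Ccv_mulr x l c : Ccv x l -> Ccv (fun n => Cmul (x n) c) (Cmul l c).
Proof.
  intros [H1 H2]; split; simpl.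
  - apply CV_minus; apply CV_mult; auto using Un_cv_const.
  - apply CV_plus; apply CV_mult; auto using Un_cv_const.
Qed.

Lemma Ccv_lsum {I} (L : list I) (x : I -> nat -> C) (l : I -> C) :
  (forall i, In i L -> Ccv (x i) (l i)) -> Ccv (fun n => lsum (fun i => x i n) L) (lsum l L).
Proof.
  intros H. split.
  - apply (Un_cv_ext (fun n => rlsum (fun i => cre (x i n)) L)); [intros; symmetry; apply cre_lsum|].
    rewrite cre_lsum. apply Un_cv_rlsum. intros i Hi; apply H; auto.
  - apply (Un_cv_ext (fun n => rlsum (fun i => cim (x i n)) L)); [intros; symmetry; apply cim_lsum|].
    rewrite cim_lsum. apply Un_cv_rlsum. intros i Hi; apply H; auto.
Qed.

(** * Projections and projective measurements *)

Section Projection.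
Context {T : Type} (P : Op T) (HP : is_projector P).

Lemma proj_l2 v : l2 v -> l2 (P v).
Proof. apply HP. Qed.

Lemma proj_zero : P (fun _ => C0) = (fun _ => C0).
Proof.
  destruct HP as [_ [Hlin _]].
  pose proof (Hlin (fun _ => C0) (fun _ => C0) C1 l2_zero l2_zero) as H.
  assert (E : vadd (fun _ : T => C0) (vscale C1 (fun _ => C0)) = (fun _ => C0)).
  { apply functional_extensionality; intros; unfold vadd, vscale; ring. }
  rewrite E in H. apply functional_extensionality; intros i.
  apply (f_equal (fun f => Csub (f i) (P (fun _ => C0) i))) in H.
  unfold vadd, vscale in H. set (z := P (fun _ => C0) i) in *.
  transitivity (Csub (Cadd z (Cmul C1 z)) z); [ring|rewrite <- H; ring].
Qed.

Lemma proj_lsum {I} (c : I -> C) (f : I -> T -> C) L : (forall k, In k L -> l2 (f k)) ->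
  P (fun i => lsum (fun k => Cmul (c k) (f k i)) L) = (fun i => lsum (fun k => Cmul (c k) (P (f k) i)) L).
Proof.
  induction L; simpl; intros H. apply proj_zero.
  destruct HP as [_ [Hlin _]].
  assert (E : (fun i => Cadd (Cmul (c a) (f a i)) (lsum (fun k => Cmul (c k) (f k i)) L)) =
              vadd (fun i => lsum (fun k => Cmul (c k) (f k i)) L) (vscale (c a) (f a))).
  { apply functional_extensionality; intros; unfold vadd, vscale; ring. }
  rewrite E, Hlin, IHL; auto using l2_lsum.
  apply functional_extensionality; intros; unfold vadd, vscale; ring.
Qed.

Lemma proj_inner_sym u v : l2 u -> l2 v -> inner u (P v) = inner (P u) (P v).
Proof.
  intros Hu Hv. destruct HP as [Hl2 [_ [Hid Hsa]]].
  rewrite <- (Hid v) at 1 by auto. rewrite Hsa; auto.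
Qed.

Lemma proj_inner_self u : l2 u -> inner u (P u) = RtoC (sqnorm (P u)).
Proof. intros Hu. rewrite proj_inner_sym by auto. apply inner_self, proj_l2; auto. Qed.

End Projection.

Lemma vsub_lincomb {T} (x y : T -> C) : vsub x y = vadd x (vscale (RtoC (-1)) y).
Proof.
  apply functional_extensionality; intros; unfold vsub, vadd, vscale, Csub; apply C_ext; simpl; ring.
Qed.

Lemma psum_vec_S {T} (A : nat -> Op T) n v i :
  psum_vec A (S n) v i = Cadd (psum_vec A n v i) (A n v i).
Proof. unfold psum_vec. rewrite seq_S, lsum_app. simpl. ring. Qed.

Lemma psum_vec_shift {T} (F : nat -> Op T) n v i :
  psum_vec F (S n) v i = Cadd (F 0%nat v i) (psum_vec (fun a => F (S a)) n v i).
Proof. unfold psum_vec. simpl. rewrite <- seq_shift, lsum_map. auto. Qed.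

Lemma psum_vec_l2 {T} (A : nat -> Op T) n v : (forall a, is_projector (A a)) -> l2 v ->
  l2 (psum_vec A n v).
Proof.
  intros HA Hv. apply (l2_ext (fun i => lsum (fun a => Cmul C1 (A a v i)) (seq 0 n))).
  - intros i; unfold psum_vec; apply lsum_ext; intros; ring.
  - apply l2_lsum. intros; apply proj_l2; auto.
Qed.

Section PVM.
Context {T : Type} (A : nat -> Op T) (HA : is_PVM A).

Lemma inner_psum_vec x n v : l2 x -> l2 v ->
  inner x (psum_vec A n v) = lsum (fun a => inner x (A a v)) (seq 0 n).
Proof.
  intros Hx Hv. apply tsum_eq. unfold psum_vec.
  eapply has_sum_ext; [|apply (has_sum_lsum (fun a i => Cmul (Cconj (x i)) (A a v i)))].
  - intros i; simpl. rewrite <- lsum_mull. auto.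
  - intros; apply inner_has_sum; auto. apply proj_l2; auto; apply HA.
Qed.

Lemma inner_psum_vec_cv y x : l2 y -> l2 x -> Ccv (fun n => inner y (psum_vec A n x)) (inner y x).
Proof.
  intros Hy Hx. apply Ccv_of_Cnorm2. intros eps He.
  assert (Hy0 : 0 <= sqnorm y) by (apply sqnorm_nonneg; auto).
  destruct (proj2 HA x Hx (eps / (sqnorm y + 1))) as [n0 Hn0]; [apply Rdiv_lt_0_compat; lra|].
  exists n0. intros n Hn. specialize (Hn0 n Hn).
  assert (Hr : l2 (vsub x (psum_vec A n x))).
  { rewrite vsub_lincomb; apply l2_lincomb; auto; apply psum_vec_l2; auto; apply HA. }
  assert (E : Csub (inner y x) (inner y (psum_vec A n x)) = inner y (vsub x (psum_vec A n x))).
  { rewrite vsub_lincomb, inner_lin_r by (auto; apply psum_vec_l2; auto; apply HA). apply C_ext; simpl; ring. }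
  rewrite E. eapply Rle_lt_trans; [apply cauchy_schwarz; auto|].
  pose proof (sqnorm_nonneg _ Hr).
  apply Rmult_lt_compat_r with (r := sqnorm y + 1) in Hn0; [|lra].
  unfold Rdiv in Hn0. rewrite Rmult_assoc, Rinv_l, Rmult_1_r in Hn0 by lra. nra.
Qed.

Lemma cre_inner_psum_vec_self x n : l2 x ->
  cre (inner x (psum_vec A n x)) = rlsum (fun a => sqnorm (A a x)) (seq 0 n).
Proof.
  intros Hx. rewrite inner_psum_vec, cre_lsum by auto. apply rlsum_ext. intros a _.
  rewrite proj_inner_self; auto. apply HA.
Qed.

Lemma bessel x n : l2 x -> rlsum (fun a => sqnorm (A a x)) (seq 0 n) <= sqnorm x.
Proof.
  intros Hx. apply (growing_ineq (fun n => rlsum (fun a => sqnorm (A a x)) (seq 0 n))).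
  - intros m. apply rlsum_seq_mono; [|lia]. intros a. apply sqnorm_nonneg, proj_l2; auto. apply HA.
  - eapply Un_cv_ext; [|apply (proj1 (inner_psum_vec_cv x x Hx Hx))].
    intros m. apply cre_inner_psum_vec_self; auto.
Qed.

End PVM.

(** * States of finite Schmidt rank *)

Definition orthonormal {T} (e : nat -> T -> C) (n : nat) : Prop :=
  forall i j, (i < n)%nat -> (j < n)%nat -> inner (e i) (e j) = if Nat.eqb i j then C1 else C0.

Section GramSchmidtStep.
Context {T : Type} (e : nat -> T -> C) (n : nat) (He : forall j, l2 (e j)) (Hon : orthonormal e n).

Definition gs_proj (v : T -> C) : T -> C := fun x => lsum (fun j => Cmul (inner (e j) v) (e j x)) (seq 0 n).
Definition gs_residual (v : T -> C) : T -> C := fun x => Csub (v x) (gs_proj v x).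

Lemma gs_residual_l2 v : l2 v -> l2 (gs_residual v).
Proof.
  intros Hv. apply (l2_ext (vadd v (vscale (RtoC (-1)) (gs_proj v)))).
  - intros; unfold vadd, vscale, gs_residual, Csub; apply C_ext; simpl; ring.
  - apply l2_lincomb; auto. apply l2_lsum; auto.
Qed.

Lemma gs_residual_orthogonal v i : l2 v -> (i < n)%nat -> inner (e i) (gs_residual v) = C0.
Proof.
  intros Hv Hi.
  replace (gs_residual v) with (vadd v (vscale (RtoC (-1)) (gs_proj v))).
  2:{ apply functional_extensionality; intros.
      unfold vadd, vscale, gs_residual, Csub; apply C_ext; simpl; ring. }
  rewrite inner_lin_r by (auto; apply l2_lsum; auto). unfold gs_proj.
  rewrite inner_lsum_r by auto.
  rewrite (lsum_ext _ (fun j => if Nat.eqb i j then inner (e j) v else C0)).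
  - rewrite lsum_kronecker by auto. apply C_ext; simpl; ring.
  - intros j Hj. apply in_seq in Hj. rewrite Hon by lia. destruct (Nat.eqb i j); ring.
Qed.

Lemma orthonormal_extend r : l2 r -> (forall i, (i < n)%nat -> inner (e i) r = C0) ->
  0 < sqnorm r ->
  orthonormal (fun j => if Nat.eqb j n then vscale (RtoC (/ sqrt (sqnorm r))) r else e j) (S n).
Proof.
  intros Hr Horth Ht i j Hi Hj.
  set (t := sqnorm r) in *. set (en := vscale (RtoC (/ sqrt t)) r).
  assert (Hen : l2 en) by (apply l2_scale; auto).
  assert (Hst : sqrt t * sqrt t = t) by (apply sqrt_sqrt; lra).
  assert (Hs : 0 < sqrt t) by (apply sqrt_lt_R0; auto).
  destruct (Nat.eq_dec i n) as [->|Ein], (Nat.eq_dec j n) as [->|Ejn].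
  - rewrite !Nat.eqb_refl. unfold en. rewrite inner_scale_l, inner_scale_r, inner_self by auto.
    fold t. apply C_ext; simpl; [|ring]. set (q := sqrt t) in *. rewrite <- Hst. field. lra.
  - rewrite Nat.eqb_refl, (proj2 (Nat.eqb_neq j n) Ejn), (proj2 (Nat.eqb_neq n j)) by lia.
    unfold en. rewrite inner_scale_l, (inner_conj (e j) r), Horth, Cconj_0 by (auto; lia). ring.
  - rewrite Nat.eqb_refl, (proj2 (Nat.eqb_neq i n) Ein).
    unfold en. rewrite inner_scale_r, Horth by (auto; lia). ring.
  - rewrite (proj2 (Nat.eqb_neq i n) Ein), (proj2 (Nat.eqb_neq j n) Ejn). apply Hon; lia.
Qed.

Lemma gram_schmidt_step v : l2 v ->
  exists n' (e' : nat -> T -> C) (c : nat -> C), (n <= n' <= S n)%nat /\ (forall j, l2 (e' j)) /\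
    orthonormal e' n' /\ (forall j, (j < n)%nat -> e' j = e j) /\
    (forall x, v x = lsum (fun j => Cmul (c j) (e' j x)) (seq 0 n')).
Proof.
  intros Hv. set (res := gs_residual v).
  assert (Hres : l2 res) by (apply gs_residual_l2; auto).
  assert (Hsplit : forall x, v x = Cadd (gs_proj v x) (res x)) by (intros; unfold res, gs_residual, Csub; ring).
  destruct (Rle_lt_or_eq_dec 0 (sqnorm res) (sqnorm_nonneg _ Hres)) as [Ht|Ht].
  - set (t := sqnorm res) in *.
    exists (S n), (fun j => if Nat.eqb j n then vscale (RtoC (/ sqrt t)) res else e j),
      (fun j => if Nat.eqb j n then RtoC (sqrt t) else inner (e j) v).
    repeat split; try lia.
    + intros j; destruct (Nat.eqb j n); auto using l2_scale.
    + apply orthonormal_extend; auto. intros; apply gs_residual_orthogonal; auto.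
    + intros j Hj. decide_nat_tests. auto.
    + intros x. rewrite seq_S, lsum_app. simpl. rewrite Nat.eqb_refl.
      rewrite (lsum_ext _ (fun j => Cmul (inner (e j) v) (e j x)))
        by (intros j Hj; apply in_seq in Hj; decide_nat_tests; auto).
      rewrite Hsplit. unfold gs_proj.
      assert (0 < sqrt t) by (apply sqrt_lt_R0; auto).
      unfold vscale. apply C_ext; simpl; field; lra.
  - exists n, e, (fun j => inner (e j) v). repeat split; auto.
    intros x. rewrite Hsplit, (sqnorm_eq0 res Hres (eq_sym Ht) x). unfold gs_proj. ring.
Qed.

End GramSchmidtStep.

Lemma gram_schmidt {T} (u : nat -> T -> C) N : (forall k, l2 (u k)) ->
  exists N' (e : nat -> T -> C) (r : nat -> nat -> C),
    (N' <= N)%nat /\ (forall j, l2 (e j)) /\ orthonormal e N' /\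
    (forall k, (k < N)%nat -> forall x, u k x = lsum (fun j => Cmul (r k j) (e j x)) (seq 0 N')).
Proof.
  intros Hu. induction N as [|N IH].
  { exists 0%nat, (fun _ _ => C0), (fun _ _ => C0).
    repeat split; [lia|intros; apply l2_zero|intros i j Hi; lia|intros; lia]. }
  destruct IH as [N' [e [r [HN [He [Hon Hrep]]]]]].
  destruct (gram_schmidt_step e N' He Hon (u N) (Hu N)) as [n' [e' [c [Hn' [He' [Hon' [Hold Hnew]]]]]]].
  exists n', e', (fun k j => if Nat.eqb k N then c j else if Nat.ltb j N' then r k j else C0).
  repeat split; auto; try lia.
  intros k Hk x. destruct (Nat.eqb_spec k N) as [->|Hne]; [apply Hnew|].
  replace n' with (N' + (n' - N'))%nat by lia. rewrite seq_app, lsum_app, Hrep by lia.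
  rewrite (lsum_zero_out _ (seq (0 + N') _)) by (intros j Hj; apply in_seq in Hj; decide_nat_tests; ring).
  transitivity (lsum (fun j => Cmul (if Nat.ltb j N' then r k j else C0) (e' j x)) (seq 0 N')); [|ring].
  apply lsum_ext; intros j Hj. apply in_seq in Hj. rewrite Hold by lia. decide_nat_tests. auto.
Qed.

Lemma schmidt_rank_le_orthonormal {IA IB} N (psi : IA * IB -> C) : schmidt_rank_le N psi ->
  exists N' (e : nat -> IA -> C) (w : nat -> IB -> C), (N' <= N)%nat /\ (forall j, l2 (e j)) /\
    (forall j, l2 (w j)) /\ orthonormal e N' /\
    (forall i j, psi (i, j) = lsum (fun k => Cmul (e k i) (w k j)) (seq 0 N')).
Proof.
  intros [u [v [Hu [Hv Hpsi]]]].
  destruct (gram_schmidt u N Hu) as [N' [e [r [HN [He [Hon Hrep]]]]]].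
  exists N', e, (fun j y => lsum (fun k => Cmul (r k j) (v k y)) (seq 0 N)).
  repeat split; auto.
  - intros j. apply l2_lsum; auto.
  - intros i y. rewrite Hpsi.
    rewrite (lsum_ext _ (fun k => lsum (fun j => Cmul (Cmul (r k j) (e j i)) (v k y)) (seq 0 N'))).
    + rewrite lsum_swap. apply lsum_ext; intros j _. rewrite <- lsum_mull. apply lsum_ext; intros; ring.
    + intros k Hk. apply in_seq in Hk. rewrite Hrep, lsum_mulr by lia. auto.
Qed.

Section SchmidtDecomposition.
Context {IA IB : Type} (e : nat -> IA -> C) (w : nat -> IB -> C) (L : list nat)
  (He : forall k, l2 (e k)) (Hw : forall k, l2 (w k))
  (psi : IA * IB -> C) (Hpsi : forall i j, psi (i, j) = lsum (fun k => Cmul (e k i) (w k j)) L).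

Lemma tens_schmidt (P : Op IA) (Q : Op IB) : is_projector P -> is_projector Q ->
  tens P Q psi = (fun ij => lsum (fun l => Cmul (P (e l) (fst ij)) (Q (w l) (snd ij))) L).
Proof.
  intros HP HQ. apply functional_extensionality; intros [i j]. unfold tens; simpl.
  assert (E : (fun i' => Q (fun j' => psi (i', j')) j) =
              (fun i' => lsum (fun k => Cmul (Q (w k) j) (e k i')) L)).
  { apply functional_extensionality; intros i'.
    replace (fun j' => psi (i', j')) with (fun j' => lsum (fun k => Cmul (e k i') (w k j')) L)
      by (apply functional_extensionality; intros; auto).
    rewrite (proj_lsum Q HQ (fun k => e k i') w L) by auto. apply lsum_ext; intros; ring. }
  rewrite E, (proj_lsum P HP (fun k => Q (w k) j) e L) by auto.
  apply lsum_ext; intros; ring.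
Qed.

Lemma inner_tens_schmidt (P : Op IA) (Q : Op IB) : is_projector P -> is_projector Q ->
  inner psi (tens P Q psi) =
  lsum (fun k => lsum (fun l => Cmul (inner (e k) (P (e l))) (inner (w k) (Q (w l)))) L) L.
Proof.
  intros HP HQ. rewrite tens_schmidt by auto. apply tsum_eq.
  eapply has_sum_ext; cycle 1.
  - apply (has_sum_lsum (fun k ij => lsum (fun l =>
        Cmul (Cmul (Cconj (e k (fst ij))) (P (e l) (fst ij)))
             (Cmul (Cconj (w k (snd ij))) (Q (w l) (snd ij)))) L)).
    intros k _. apply (has_sum_lsum (fun l ij =>
        Cmul (Cmul (Cconj (e k (fst ij))) (P (e l) (fst ij)))
             (Cmul (Cconj (w k (snd ij))) (Q (w l) (snd ij))))).
    intros l _.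
    apply (has_sum_prod (fun i => Cmul (Cconj (e k i)) (P (e l) i))
                        (fun j => Cmul (Cconj (w k j)) (Q (w l) j)));
      first [apply cabs_summable_inner | apply inner_has_sum]; auto; apply proj_l2; auto.
  - intros [i j]; simpl. rewrite Hpsi, lsum_conj, <- lsum_mulr.
    apply lsum_ext; intros k _. rewrite <- lsum_mull. apply lsum_ext; intros l _.
    rewrite Cconj_mul. ring.
Qed.

End SchmidtDecomposition.

(* AM-GM applied to |x y| <= sqrt (X1 Y2 * X2 Y1). *)
Lemma cre_mul_le_am_gm x y X1 X2 Y1 Y2 : 0 <= X1 -> 0 <= X2 -> 0 <= Y1 -> 0 <= Y2 ->
  Cnorm2 x <= X1 * X2 -> Cnorm2 y <= Y1 * Y2 -> cre (Cmul x y) <= (X1 * Y2 + X2 * Y1) / 2.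
Proof.
  intros HX1 HX2 HY1 HY2 Hx Hy.
  assert (Hxy : Cnorm2 x * Cnorm2 y <= (X1 * X2) * (Y1 * Y2))
    by (apply Rmult_le_compat; auto using Cnorm2_nonneg).
  pose proof (cre_sqr_le_Cnorm2 (Cmul x y)) as Hcre. rewrite Cnorm2_mul in Hcre.
  pose proof (Rle_0_sqr (X1 * Y2 - X2 * Y1)) as Hsq. unfold Rsqr in Hsq.
  assert (0 <= X1 * Y2 + X2 * Y1) by nra. nra.
Qed.

Section SchmidtRankBound.
Context {IA IB : Type} (psi : IA * IB -> C) (A : nat -> Op IA) (B : nat -> Op IB)
  (HA : is_PVM A) (HB : is_PVM B) (n : nat) (e : nat -> IA -> C) (w : nat -> IB -> C)
  (He : forall j, l2 (e j)) (Hw : forall j, l2 (w j)) (Hon : orthonormal e n)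
  (Hpsi : forall i j, psi (i, j) = lsum (fun k => Cmul (e k i) (w k j)) (seq 0 n)).

Definition joint_prob a b := cre (inner psi (tens (A a) (B b) psi)).
Definition weightA a := rlsum (fun k => sqnorm (A a (e k))) (seq 0 n).
Definition weightB b := rlsum (fun k => sqnorm (B b (w k))) (seq 0 n).

Lemma weightA_nonneg a : 0 <= weightA a.
Proof. apply rlsum_nonneg; intros; apply sqnorm_nonneg, proj_l2; auto; apply HA. Qed.

Lemma joint_prob_schmidt a b : joint_prob a b = cre (lsum (fun k => lsum (fun l =>
  Cmul (inner (e k) (A a (e l))) (inner (w k) (B b (w l)))) (seq 0 n)) (seq 0 n)).
Proof.
  unfold joint_prob. rewrite (inner_tens_schmidt e w (seq 0 n) He Hw psi Hpsi); [auto|apply HA|apply HB].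
Qed.

Lemma joint_prob_le_weights a b : joint_prob a b <= weightA a * weightB b.
Proof.
  pose proof (proj1 HA a) as HPa. pose proof (proj1 HB b) as HPb.
  rewrite joint_prob_schmidt, cre_lsum. unfold weightA, weightB. rewrite <- rlsum_sym_prod.
  apply rlsum_le; intros k _. rewrite cre_lsum. apply rlsum_le; intros l _.
  apply cre_mul_le_am_gm; try (apply sqnorm_nonneg, proj_l2; auto).
  - rewrite (proj_inner_sym (A a)) by auto. apply cauchy_schwarz; apply proj_l2; auto.
  - rewrite (proj_inner_sym (B b)) by auto. apply cauchy_schwarz; apply proj_l2; auto.
Qed.

(* Bessel's inequality for each of the n orthonormal vectors e_k. *)
Lemma weightA_sum_le m : rlsum weightA (seq 0 m) <= INR n.
Proof.
  unfold weightA. rewrite rlsum_swap.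
  replace (INR n) with (rlsum (fun _ => 1) (seq 0 n)) by (rewrite rlsum_const, length_seq; ring).
  apply rlsum_le. intros k Hk. apply in_seq in Hk.
  replace 1 with (sqnorm (e k)) by (unfold sqnorm; rewrite Hon, Nat.eqb_refl by lia; auto).
  apply bessel; auto.
Qed.

Lemma weightB_limit b : Un_cv (fun m => rlsum (fun a => joint_prob a b) (seq 0 m)) (weightB b).
Proof.
  set (y := fun k l => inner (w k) (B b (w l))).
  assert (Hsum : forall m, rlsum (fun a => joint_prob a b) (seq 0 m) =
    cre (lsum (fun k => lsum (fun l => Cmul (inner (e k) (psum_vec A m (e l))) (y k l))
      (seq 0 n)) (seq 0 n))).
  { intros m. rewrite (rlsum_ext _ (fun a => cre (lsum (fun k => lsum (fun l =>
      Cmul (inner (e k) (A a (e l))) (y k l)) (seq 0 n)) (seq 0 n)))) by (intros; apply joint_prob_schmidt).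
    rewrite <- cre_lsum. f_equal. rewrite lsum_swap. apply lsum_ext; intros k _.
    rewrite lsum_swap. apply lsum_ext; intros l _.
    rewrite inner_psum_vec, lsum_mulr by auto. auto. }
  assert (Hlim : weightB b = cre (lsum (fun k => lsum (fun l =>
    Cmul (inner (e k) (e l)) (y k l)) (seq 0 n)) (seq 0 n))).
  { unfold weightB. rewrite cre_lsum. apply rlsum_ext. intros k Hk. apply in_seq in Hk.
    rewrite (lsum_ext _ (fun l => if Nat.eqb k l then y k l else C0)).
    - rewrite lsum_kronecker by lia. unfold y. rewrite proj_inner_self by (auto; apply HB). auto.
    - intros l Hl. apply in_seq in Hl. rewrite Hon by lia. destruct (Nat.eqb k l); ring. }
  rewrite Hlim. eapply Un_cv_ext; [intros m; symmetry; apply Hsum|].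
  apply Ccv_lsum. intros k _. apply Ccv_lsum. intros l _.
  apply Ccv_mulr, inner_psum_vec_cv; auto.
Qed.

End SchmidtRankBound.

Lemma correlation_schmidt_rank_factor (strat : strategy) N (p : corr) :
  valid_strategy strat -> schmidt_rank_le N (st strat) -> produces strat p ->
  exists t s : nat -> R, (forall a, 0 <= t a) /\
    (forall a b, p a b 0%nat 0%nat <= t a * s b) /\ (forall m, rlsum t (seq 0 m) <= INR N) /\
    (forall b, Un_cv (fun m => rlsum (fun a => p a b 0%nat 0%nat) (seq 0 m)) (s b)).
Proof.
  intros [_ [_ [HA HB]]] Hsch Hprod.
  destruct (schmidt_rank_le_orthonormal N (st strat) Hsch) as [n [e [w [HN [He [Hw [Hon Hpsi]]]]]]].
  assert (HA0 : is_PVM (MA strat 0)) by (apply HA; lia).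
  assert (HB0 : is_PVM (MB strat 0)) by (apply HB; lia).
  assert (Ep : forall a b, p a b 0%nat 0%nat = joint_prob (st strat) (MA strat 0) (MB strat 0) a b)
    by (intros; rewrite Hprod by lia; reflexivity).
  exists (weightA (MA strat 0) n e), (weightB (MB strat 0) n w).
  repeat split.
  - intros; apply weightA_nonneg; auto.
  - intros; rewrite Ep; apply joint_prob_le_weights; auto.
  - intros m. eapply Rle_trans; [apply weightA_sum_le; auto|]. apply le_INR; auto.
  - intros b. eapply Un_cv_ext; [|apply (weightB_limit (st strat) _ _ HA0 HB0 n e w He Hw Hon Hpsi)].
    intros m. apply rlsum_ext; intros; symmetry; apply Ep.
Qed.

(** * The ideal correlation on the question pair (0,0) *)

Ltac div2_facts x := pose proof (Nat.div_mod_eq x 2); pose proof (Nat.mod_upper_bound x 2 ltac:(lia)).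

Lemma div2_double m : ((2 * m) / 2 = m)%nat.
Proof. div2_facts (2 * m)%nat. lia. Qed.
Lemma div2_double_S m : ((2 * m + 1) / 2 = m)%nat.
Proof. div2_facts (2 * m + 1)%nat. lia. Qed.
Lemma parity a : (a = 2 * (a / 2))%nat \/ (a = 2 * (a / 2) + 1)%nat.
Proof. div2_facts a. lia. Qed.

Lemma sgn_double m : sgn (2 * m) = 1.
Proof. unfold sgn. rewrite Nat.even_even. auto. Qed.
Lemma sgn_double_S m : sgn (2 * m + 1) = -1.
Proof. unfold sgn. rewrite Nat.even_odd. auto. Qed.

Definition pstar00 a b : R :=
  if Nat.eqb (a / 2) (b / 2) then cc a * cc a * (1 + sgn b * sgn a * cos (mu (b / 2))) / 2 else 0.

Lemma pstar_00 a b : pstar a b 0%nat 0%nat = pstar00 a b.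
Proof.
  unfold pstar, corr_of. change (A_star 0 a) with (ket_proj a).
  change (B_star 0 b) with (eigproj (2 * (b / 2)) (mu (b / 2)) 1 (sgn b)).
  set (Q := eigproj (2 * (b / 2)) (mu (b / 2)) 1 (sgn b)).
  set (f := fun ij : nat * nat => Cmul (Cconj (Psi_inf ij)) (tens (ket_proj a) Q Psi_inf ij)).
  unfold inner. fold f.
  rewrite (tsum_eq f (lsum f [(a, a)])).
  2:{ apply has_sum_finite; [repeat constructor; auto|].
      intros [i j] Hn. unfold f, Psi_inf, tens, ket_proj; simpl.
      destruct (Nat.eqb i j) eqn:E1; [|apply C_ext; simpl; ring].
      apply Nat.eqb_eq in E1; subst.
      destruct (Nat.eqb j a) eqn:E2; [|apply C_ext; simpl; ring].
      apply Nat.eqb_eq in E2; subst. exfalso; apply Hn; simpl; auto. }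
  simpl. unfold f, Psi_inf, tens, ket_proj; simpl. rewrite Nat.eqb_refl.
  unfold Q, eigproj, Pi_op, O_op, pstar00.
  assert (Hsgn : forall c, ((c = 2 * (c / 2))%nat /\ sgn c = 1) \/ ((c = 2 * (c / 2) + 1)%nat /\ sgn c = -1)).
  { intros c. destruct (parity c) as [Ec|Ec]; [left|right]; split; auto; rewrite Ec;
      [apply sgn_double|apply sgn_double_S]. }
  destruct (Hsgn a) as [[Ea Sa]|[Ea Sa]], (Hsgn b) as [[Eb Sb]|[Eb Sb]]; rewrite Sa, Sb;
    div2_facts a; div2_facts b;
    (destruct (Nat.eqb (a / 2) (b / 2)) eqn:E;
      [apply Nat.eqb_eq in E | apply Nat.eqb_neq in E]; decide_nat_tests; simpl; field).
Qed.

Definition block_mass m := cc (2 * m)%nat * cc (2 * m)%nat + cc (2 * m + 1)%nat * cc (2 * m + 1)%nat.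

Lemma pstar00_block a m : pstar00 a (2 * m)%nat + pstar00 a (2 * m + 1)%nat =
  if Nat.eqb (a / 2) m then cc a * cc a else 0.
Proof.
  unfold pstar00. rewrite sgn_double, sgn_double_S, div2_double, div2_double_S.
  destruct (Nat.eqb (a / 2) m); field.
Qed.

Lemma cc_sqr a : cc a * cc a = (Cnorm_const * Cnorm_const) / (INR (S a)) ^ 16.
Proof. unfold cc. assert (0 < INR (S a)) by (apply lt_0_INR; lia). field. lra. Qed.

Lemma cc_sqr_antitone a a' : (a <= a')%nat -> cc a' * cc a' <= cc a * cc a.
Proof.
  intros H. rewrite !cc_sqr. unfold Rdiv. apply Rmult_le_compat_l; [apply Rle_0_sqr|].
  apply Rinv_le_contravar; [apply pow_lt, lt_0_INR; lia|].
  apply pow_incr. split; [apply pos_INR|apply le_INR; lia].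
Qed.

Lemma block_mass_nonneg m : 0 <= block_mass m.
Proof.
  unfold block_mass. pose proof (Rle_0_sqr (cc (2 * m))); pose proof (Rle_0_sqr (cc (2 * m + 1))).
  unfold Rsqr in *. lra.
Qed.

Lemma block_mass_antitone m m' : (m <= m')%nat -> block_mass m' <= block_mass m.
Proof.
  intros. unfold block_mass.
  pose proof (cc_sqr_antitone (2 * m) (2 * m') ltac:(lia)).
  pose proof (cc_sqr_antitone (2 * m + 1) (2 * m' + 1) ltac:(lia)). lra.
Qed.

Lemma rlsum_pair_le (f : nat -> R) n b b' : (forall x, 0 <= f x) ->
  (b < n)%nat -> (b' < n)%nat -> b <> b' -> f b + f b' <= rlsum f (seq 0 n).
Proof.
  intros Hf Hb Hb' Hne. replace (f b + f b') with (rlsum f [b; b']) by (simpl; ring).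
  apply rlsum_incl_le; auto.
  - repeat constructor; simpl; intuition.
  - intros x [<-|[<-|[]]]; apply in_seq; lia.
Qed.

Lemma pstar00_block_sum m n : (2 * m + 1 < n)%nat ->
  rlsum (fun a => pstar00 a (2 * m)%nat + pstar00 a (2 * m + 1)%nat) (seq 0 n) = block_mass m.
Proof.
  intros Hn.
  rewrite (rlsum_ext _ (fun a => if Nat.eqb (a / 2) m then cc a * cc a else 0))
    by (intros; apply pstar00_block).
  rewrite (rlsum_support _ [(2 * m)%nat; (2 * m + 1)%nat]).
  - unfold rlsum; cbn [fold_right]. rewrite div2_double, div2_double_S, Nat.eqb_refl.
    unfold block_mass. ring.
  - repeat constructor; simpl; intuition lia.
  - apply seq_NoDup.
  - intros x Hx. apply in_seq. simpl in Hx. lia.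
  - intros x Hx. destruct (Nat.eqb (x / 2) m) eqn:E; auto.
    apply Nat.eqb_eq in E. exfalso. apply Hx. div2_facts x. simpl. lia.
Qed.

Section TailBlocks.
Variables (p : corr) (delta : R) (N : nat) (t s : nat -> R).
Hypotheses (Ht : forall a, 0 <= t a)
  (Hle : forall a b, p a b 0%nat 0%nat <= t a * s b) (Htsum : forall m, rlsum t (seq 0 m) <= INR N)
  (Hslim : forall b, Un_cv (fun m => rlsum (fun a => p a b 0%nat 0%nat) (seq 0 m)) (s b))
  (Hd : corr_dist_le p pstar delta).

Lemma bob_block_marginal_le m : s (2 * m)%nat + s (2 * m + 1)%nat <= block_mass m + delta.
Proof.
  set (k := (2 * m + 2)%nat).
  pose proof (fun b => CV_shift' _ k _ (Hslim b)) as Hshift. simpl in Hshift.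
  apply (Rle_cv_lim (Un := fun n => rlsum (fun a => p a (2 * m)%nat 0%nat 0%nat) (seq 0 (n + k))
                                   + rlsum (fun a => p a (2 * m + 1)%nat 0%nat 0%nat) (seq 0 (n + k)))
                    (Vn := fun _ => block_mass m + delta));
    [|apply CV_plus; apply Hshift|apply Un_cv_const].
  intros n. rewrite <- rlsum_add.
  assert (Hdist : rlsum (fun a => Rabs (p a (2 * m)%nat 0%nat 0%nat - pstar a (2 * m)%nat 0%nat 0%nat)
                     + Rabs (p a (2 * m + 1)%nat 0%nat 0%nat - pstar a (2 * m + 1)%nat 0%nat 0%nat))
                    (seq 0 (n + k)) <= delta).
  { eapply Rle_trans; [|apply (Hd 0%nat 0%nat ltac:(lia) ltac:(lia) (n + k)%nat)].
    apply rlsum_le. intros a _.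
    apply (rlsum_pair_le (fun b => Rabs (p a b 0%nat 0%nat - pstar a b 0%nat 0%nat)));
      [intros; apply Rabs_pos|lia|lia|lia]. }
  pose proof (pstar00_block_sum m (n + k) ltac:(lia)) as Hmass.
  eapply Rle_trans; [apply (rlsum_le _ (fun a => (pstar00 a (2 * m)%nat + pstar00 a (2 * m + 1)%nat) +
      (Rabs (p a (2 * m)%nat 0%nat 0%nat - pstar a (2 * m)%nat 0%nat 0%nat)
       + Rabs (p a (2 * m + 1)%nat 0%nat 0%nat - pstar a (2 * m + 1)%nat 0%nat 0%nat))))|].
  - intros a _. rewrite !pstar_00.
    pose proof (Rle_abs (p a (2 * m)%nat 0%nat 0%nat - pstar00 a (2 * m)%nat)).
    pose proof (Rle_abs (p a (2 * m + 1)%nat 0%nat 0%nat - pstar00 a (2 * m + 1)%nat)). lra.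
  - rewrite rlsum_add, Hmass. lra.
Qed.

Definition tail_block_sum (q : nat -> nat -> R) M : R :=
  rlsum (fun a => if Nat.leb (2 * M) a then q a (2 * (a / 2))%nat + q a (2 * (a / 2) + 1)%nat else 0)
    (seq 0 (4 * M)).

Lemma tail_block_sum_pstar M : tail_block_sum (fun a b => pstar a b 0%nat 0%nat) M =
  rlsum (fun a => if Nat.leb (2 * M) a then cc a * cc a else 0) (seq 0 (4 * M)).
Proof.
  apply rlsum_ext. intros a _. destruct (Nat.leb (2 * M) a); auto.
  rewrite !pstar_00, pstar00_block, Nat.eqb_refl. auto.
Qed.

Lemma tail_block_sum_close M :
  tail_block_sum (fun a b => pstar a b 0%nat 0%nat) M - delta
  <= tail_block_sum (fun a b => p a b 0%nat 0%nat) M.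
Proof.
  assert (tail_block_sum (fun a b => pstar a b 0%nat 0%nat) M
          - tail_block_sum (fun a b => p a b 0%nat 0%nat) M <= delta).
  { unfold tail_block_sum. unfold Rminus. rewrite <- rlsum_opp, <- rlsum_add.
    eapply Rle_trans; [|apply (Hd 0%nat 0%nat ltac:(lia) ltac:(lia) (4 * M)%nat)].
    apply rlsum_le. intros a Ha. apply in_seq in Ha.
    destruct (Nat.leb (2 * M) a);
      [|rewrite Ropp_0, Rplus_0_r; apply rlsum_nonneg; intros; apply Rabs_pos].
    div2_facts a.
    eapply Rle_trans; [|apply (rlsum_pair_le (fun b => Rabs (p a b 0%nat 0%nat - pstar a b 0%nat 0%nat))
      (4 * M) (2 * (a / 2)) (2 * (a / 2) + 1)); [intros; apply Rabs_pos|lia|lia|lia]].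
    pose proof (Rle_abs (pstar a (2 * (a / 2))%nat 0%nat 0%nat - p a (2 * (a / 2))%nat 0%nat 0%nat)).
    pose proof (Rle_abs (pstar a (2 * (a / 2) + 1)%nat 0%nat 0%nat - p a (2 * (a / 2) + 1)%nat 0%nat 0%nat)).
    rewrite !(Rabs_minus_sym (pstar _ _ _ _)) in *. lra. }
  lra.
Qed.

Lemma tail_block_sum_le M : tail_block_sum (fun a b => p a b 0%nat 0%nat) M <= INR N * (block_mass M + delta).
Proof.
  assert (Hdelta : 0 <= delta)
    by (eapply Rle_trans; [|apply (Hd 0%nat 0%nat ltac:(lia) ltac:(lia) 0%nat)]; simpl; lra).
  eapply Rle_trans; [apply (rlsum_le _ (fun a => t a * (block_mass M + delta)))|].
  - intros a _. pose proof (block_mass_nonneg M). destruct (Nat.leb (2 * M) a) eqn:E.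
    + apply Nat.leb_le in E.
      pose proof (Hle a (2 * (a / 2))%nat). pose proof (Hle a (2 * (a / 2) + 1)%nat).
      pose proof (bob_block_marginal_le (a / 2)).
      pose proof (block_mass_antitone M (a / 2) ltac:(div2_facts a; lia)).
      assert (t a * (s (2 * (a / 2))%nat + s (2 * (a / 2) + 1)%nat) <= t a * (block_mass M + delta))
        by (apply Rmult_le_compat_l; auto; lra).
      lra.
    + apply Rmult_le_pos; auto; lra.
  - rewrite (rlsum_ext _ (fun a => (block_mass M + delta) * t a)) by (intros; ring). rewrite rlsum_scal.
    pose proof (block_mass_nonneg M). rewrite Rmult_comm.
    apply Rmult_le_compat_r; auto; lra.
Qed.

Lemma tail_mass_le M : rlsum (fun a => if Nat.leb (2 * M) a then cc a * cc a else 0) (seq 0 (4 * M)) - delta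
  <= INR N * (block_mass M + delta).
Proof.
  rewrite <- tail_block_sum_pstar.
  eapply Rle_trans; [apply tail_block_sum_close|apply tail_block_sum_le].
Qed.

End TailBlocks.

Definition inv_pow16 (i : nat) : R := / (INR (S i)) ^ 16.

Lemma inv_pow16_pos i : 0 < inv_pow16 i.
Proof. unfold inv_pow16. apply Rinv_0_lt_compat, pow_lt, lt_0_INR; lia. Qed.

Lemma inv_pow16_le_telescope i : (1 <= i)%nat -> inv_pow16 i <= / INR i - / INR (S i).
Proof.
  intros H. unfold inv_pow16. rewrite S_INR. assert (1 <= INR i) by (apply (le_INR 1); lia).
  replace (/ INR i - / (INR i + 1)) with (/ (INR i * (INR i + 1))) by (field; lra).
  apply Rinv_le_contravar; [nra|].
  apply Rle_trans with ((INR i + 1) ^ 2); [simpl; nra|apply Rle_pow; [lra|lia]].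
Qed.

Lemma inv_pow16_partial_le n : rlsum inv_pow16 (seq 0 n) <= 2.
Proof.
  assert (H : forall n, (1 <= n)%nat -> rlsum inv_pow16 (seq 0 n) <= 2 - / INR n).
  { intros m Hm. induction m as [|m IH]; [lia|]. destruct m.
    - unfold inv_pow16; simpl. lra.
    - rewrite seq_S, rlsum_app. simpl rlsum at 2. specialize (IH ltac:(lia)).
      pose proof (inv_pow16_le_telescope (S m) ltac:(lia)). simpl plus. lra. }
  destruct n; [simpl; lra|].
  pose proof (H (S n) ltac:(lia)). pose proof (Rinv_0_lt_compat (INR (S n)) (lt_0_INR (S n) ltac:(lia))). lra.
Qed.

Lemma inv_pow16_has_sum : exists s, rhas_sum inv_pow16 s /\ 1 <= s <= 2.
Proof.
  assert (Hnn : forall i, 0 <= inv_pow16 i) by (intros; left; apply inv_pow16_pos).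
  assert (Hb : forall L, NoDup L -> rlsum inv_pow16 L <= 2).
  { intros L HL. eapply Rle_trans; [apply (rlsum_incl_le _ _ _ Hnn HL (incl_seq_list_max L))|].
    apply inv_pow16_partial_le. }
  destruct (rhas_sum_of_rbounded inv_pow16 Hnn) as [s Hs]; [exists 2; auto|].
  exists s. repeat split; auto.
  - pose proof (rhas_sum_term_le _ Hnn s 0%nat Hs) as H0. unfold inv_pow16 in H0. simpl in H0. lra.
  - apply (rhas_sum_le_bound _ s 2 Hs Hb).
Qed.

Lemma Cnorm_const_sqr : exists s, rhas_sum inv_pow16 s /\ 1 <= s <= 2 /\ Cnorm_const * Cnorm_const = / s.
Proof.
  destruct inv_pow16_has_sum as [s [Hs Hb]]. exists s. repeat split; auto; try lra.
  unfold Cnorm_const. rewrite (tsum_eq _ (RtoC s)).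
  - simpl. rewrite <- Rinv_mult, sqrt_sqrt by lra. auto.
  - apply has_sum_iff. split; [exact Hs|apply rhas_sum_zero].
Qed.

Lemma cc_sqr_inv_pow16 s : Cnorm_const * Cnorm_const = / s -> forall a, cc a * cc a = / s * inv_pow16 a.
Proof. intros H a. rewrite cc_sqr, H. auto. Qed.

Definition diag_fst (L : list (nat * nat)) : list nat := map fst (filter (fun p => Nat.eqb (fst p) (snd p)) L).

Lemma rlsum_diag (h : nat -> R) L :
  rlsum (fun p : nat * nat => if Nat.eqb (fst p) (snd p) then h (fst p) else 0) L = rlsum h (diag_fst L).
Proof.
  unfold diag_fst. induction L as [|[i j] L IH]; simpl; auto.
  destruct (Nat.eqb i j); simpl; rewrite IH; ring.
Qed.

Lemma diag_fst_NoDup L : NoDup L -> NoDup (diag_fst L).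
Proof.
  unfold diag_fst. induction 1 as [|[i j] L Hn HL IH]; simpl; [constructor|].
  destruct (Nat.eqb i j) eqn:E; simpl; auto. constructor; auto.
  intro Hin. apply in_map_iff in Hin as [[i' j'] [Ei Hin]]. simpl in Ei; subst.
  apply filter_In in Hin as [Hin Eq]. simpl in Eq.
  apply Nat.eqb_eq in Eq, E. subst. contradiction.
Qed.

Lemma rhas_sum_diag (h : nat -> R) s : rhas_sum h s ->
  rhas_sum (fun p : nat * nat => if Nat.eqb (fst p) (snd p) then h (fst p) else 0) s.
Proof.
  intros H eps He. destruct (H eps He) as [L0 H0]. exists (map (fun i => (i, i)) L0).
  intros L HL Hi. rewrite rlsum_diag. apply H0; [apply diag_fst_NoDup; auto|].
  intros x Hx. unfold diag_fst. apply in_map_iff. exists (x, x). split; auto.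
  apply filter_In. split; [apply Hi, in_map_iff; exists x; auto|apply Nat.eqb_refl].
Qed.

Lemma Psi_inf_norm_sum : rhas_sum (fun ij => Cnorm2 (Psi_inf ij)) 1.
Proof.
  destruct Cnorm_const_sqr as [s [Hs [Hb HK]]].
  assert (H : rhas_sum (fun i => cc i * cc i) 1).
  { replace 1 with (/ s * s) by (field; lra).
    eapply rhas_sum_ext; [|apply (rhas_sum_scal _ (/ s) _ Hs)].
    intros i; simpl. rewrite (cc_sqr_inv_pow16 s HK). auto. }
  eapply rhas_sum_ext; [|apply (rhas_sum_diag _ _ H)].
  intros [i j]. unfold Psi_inf; simpl. destruct (Nat.eqb i j); unfold Cnorm2; simpl; ring.
Qed.

Lemma Psi_inf_l2 : l2 Psi_inf.
Proof.
  exists 1. intros L HL. apply (rhas_sum_ge_rlsum _ (fun x => Cnorm2_nonneg _) _ _ Psi_inf_norm_sum HL).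
Qed.

Lemma Psi_inf_sqnorm : sqnorm Psi_inf = 1.
Proof. apply (rhas_sum_unique _ _ _ (proj1 (inner_self_has_sum Psi_inf Psi_inf_l2)) Psi_inf_norm_sum). Qed.

(** * Measurements built from blocks of size at most two *)

Definition block_op (k : nat) (al be ga : R) : Op nat := fun v i =>
  if Nat.eqb i k then Cadd (Cscale al (v k)) (Cscale be (v (S k)))
  else if Nat.eqb i (S k) then Cadd (Cscale be (v k)) (Cscale ga (v (S k))) else C0.

Definition block_idempotent (al be ga : R) : Prop :=
  al * al + be * be = al /\ al * be + be * ga = be /\ be * be + ga * ga = ga.

Lemma block_idempotent_compl al be ga :
  block_idempotent al be ga -> block_idempotent (1 - al) (- be) (1 - ga).
Proof. intros [H1 [H2 H3]]. unfold block_idempotent. repeat split; nra. Qed.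

Lemma block_idempotent_bounds al be ga :
  block_idempotent al be ga -> 0 <= al <= 1 /\ be * be <= 1 /\ 0 <= ga <= 1.
Proof. intros [H1 [H2 H3]]. pose proof (Rle_0_sqr be). unfold Rsqr in *. nra. Qed.

Lemma block_idempotent_apply al be ga x y : block_idempotent al be ga ->
  al * (al * x + be * y) + be * (be * x + ga * y) = al * x + be * y /\
  be * (al * x + be * y) + ga * (be * x + ga * y) = be * x + ga * y.
Proof.
  intros [H1 [H2 H3]]. split.
  - transitivity ((al * al + be * be) * x + (al * be + be * ga) * y); [ring|rewrite H1, H2; ring].
  - transitivity ((al * be + be * ga) * x + (be * be + ga * ga) * y); [ring|rewrite H2, H3; ring].
Qed.

Lemma block_op_outside k al be ga v i : ~ In i [k; S k] -> block_op k al be ga v i = C0.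
Proof.
  intros H. unfold block_op.
  destruct (Nat.eqb_spec i k); [subst; exfalso; apply H; simpl; auto|].
  destruct (Nat.eqb_spec i (S k)); [subst; exfalso; apply H; simpl; auto|auto].
Qed.

Lemma block_op_zero k v i : block_op k 0 0 0 v i = C0.
Proof.
  unfold block_op. destruct (Nat.eqb i k); [|destruct (Nat.eqb i (S k))]; auto; apply C_ext; simpl; ring.
Qed.

Lemma NoDup_succ_pair k : NoDup [k; S k].
Proof. repeat constructor; simpl; lia. Qed.

Lemma block_op_projector k al be ga : block_idempotent al be ga -> is_projector (block_op k al be ga).
Proof.
  intros Hid. pose proof (fun x y => block_idempotent_apply al be ga x y Hid) as Happ.
  assert (HkSk : Nat.eqb (S k) k = false) by (apply Nat.eqb_neq; lia).
  repeat split.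
  - intros v _. apply (l2_finite _ [k; S k]); [apply NoDup_succ_pair|]. intros; apply block_op_outside; auto.
  - intros u v c _ _. apply functional_extensionality; intros i. unfold block_op, vadd, vscale.
    destruct (Nat.eqb i k); [|destruct (Nat.eqb i (S k))]; rewrite ?Cscale_RtoC; ring.
  - intros v _. apply functional_extensionality; intros i. unfold block_op at 1.
    destruct (Nat.eqb_spec i k) as [->|]; [|destruct (Nat.eqb_spec i (S k)) as [->|]]; auto.
    + unfold block_op. rewrite Nat.eqb_refl, HkSk, Nat.eqb_refl.
      apply C_ext; simpl; apply Happ.
    + unfold block_op. rewrite !Nat.eqb_refl, HkSk.
      apply C_ext; simpl; apply Happ.
    + unfold block_op. destruct (Nat.eqb_spec i k), (Nat.eqb_spec i (S k)); try contradiction; auto.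
  - intros u v _ _. unfold inner.
    rewrite (tsum_eq _ (lsum (fun i => Cmul (Cconj (u i)) (block_op k al be ga v i)) [k; S k])),
            (tsum_eq _ (lsum (fun i => Cmul (Cconj (block_op k al be ga u i)) (v i)) [k; S k])).
    + simpl. unfold block_op. rewrite Nat.eqb_refl, HkSk, Nat.eqb_refl. apply C_ext; simpl; ring.
    + apply has_sum_finite; [apply NoDup_succ_pair|]. intros i Hi. rewrite block_op_outside by auto.
      apply C_ext; simpl; ring.
    + apply has_sum_finite; [apply NoDup_succ_pair|]. intros i Hi. rewrite block_op_outside by auto.
      apply C_ext; simpl; ring.
Qed.

Lemma block_op_add_compl k al be ga v i :
  Cadd (block_op k al be ga v i) (block_op k (1 - al) (- be) (1 - ga) v i) =
  if orb (Nat.eqb i k) (Nat.eqb i (S k)) then v i else C0.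
Proof.
  unfold block_op. destruct (Nat.eqb_spec i k) as [->|]; [|destruct (Nat.eqb_spec i (S k)) as [->|]];
    simpl; try ring; apply C_ext; simpl; ring.
Qed.

Lemma ket_proj_block a : ket_proj a = block_op a 1 0 0.
Proof.
  apply functional_extensionality; intros v; apply functional_extensionality; intros i.
  unfold ket_proj, block_op. destruct (Nat.eqb_spec i a) as [->|].
  - apply C_ext; simpl; ring.
  - destruct (Nat.eqb i (S a)); auto. apply C_ext; simpl; ring.
Qed.

Lemma eigproj_block k m s eps : eigproj k m s eps =
  block_op k ((1 + eps * cos m) / 2) (eps * (s * sin m) / 2) ((1 - eps * cos m) / 2).
Proof.
  apply functional_extensionality; intros v; apply functional_extensionality; intros i.
  unfold eigproj, Pi_op, O_op, block_op.
  destruct (Nat.eqb_spec i k) as [->|]; [|destruct (Nat.eqb_spec i (S k)) as [->|]]; simpl;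
    apply C_ext; simpl; field.
Qed.

Lemma eigproj_idempotent m s : s * s = 1 ->
  block_idempotent ((1 + cos m) / 2) (s * sin m / 2) ((1 - cos m) / 2).
Proof.
  intros Hs. pose proof (sin2_cos2 m) as Hsc. unfold Rsqr in Hsc. unfold block_idempotent.
  replace (s * sin m / 2 * (s * sin m / 2)) with ((s * s) * (sin m * sin m) / 4) by field.
  rewrite Hs. repeat split; nra.
Qed.

Definition block_resolution (F : nat -> Op nat) : Prop :=
  (forall a, is_projector (F a)) /\
  forall n, exists m al be ga, (n <= S m)%nat /\ block_idempotent al be ga /\
    forall v i, psum_vec F n v i = if Nat.ltb i m then v i else block_op m al be ga v i.

Definition resid_bound (m : nat) (v : nat -> C) (i : nat) : R :=
  (if Nat.leb m i then 8 * Cnorm2 (v i) else 0) +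
  (if orb (Nat.eqb i m) (Nat.eqb i (S m)) then 8 * (Cnorm2 (v m) + Cnorm2 (v (S m))) else 0).

Lemma l2_tail_small (v : nat -> C) : l2 v -> forall eta, 0 < eta -> exists m0, forall m, (m0 <= m)%nat ->
  forall L, NoDup L -> (forall i, In i L -> (m <= i)%nat) -> rlsum (fun i => Cnorm2 (v i)) L <= eta.
Proof.
  intros Hv eta He.
  destruct (rhas_sum_of_rbounded (fun i => Cnorm2 (v i)) (fun i => Cnorm2_nonneg _) Hv) as [s HS].
  destruct (HS eta He) as [L0 H0].
  specialize (H0 (dedup L0) (dedup_NoDup _) (incl_dedup L0)).
  exists (S (list_max (dedup L0))). intros m Hm L HL Hge.
  assert (HND : NoDup (dedup L0 ++ L)).
  { apply NoDup_app; auto using dedup_NoDup. intros x Hx1 Hx2.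
    pose proof (incl_seq_list_max (dedup L0) x Hx1) as Hx. apply in_seq in Hx.
    specialize (Hge x Hx2). lia. }
  pose proof (rhas_sum_ge_rlsum _ (fun i => Cnorm2_nonneg _) _ _ HS HND) as H. rewrite rlsum_app in H.
  apply Rabs_def2 in H0. lra.
Qed.

Lemma resid_small (v : nat -> C) : l2 v -> forall eps, 0 < eps -> exists m0, forall m, (m0 <= m)%nat ->
  forall r : nat -> C, l2 r -> (forall i, Cnorm2 (r i) <= resid_bound m v i) -> sqnorm r < eps.
Proof.
  intros Hv eps He.
  destruct (l2_tail_small v Hv (eps / 41)) as [m0 Hm0]; [lra|].
  exists m0. intros m Hm r Hr Hri.
  assert (Hpt : forall i, (m <= i)%nat -> Cnorm2 (v i) <= eps / 41).
  { intros i Hi. pose proof (Hm0 m Hm [i] ltac:(repeat constructor; auto) ltac:(intros j [<-|[]]; lia)) as H.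
    simpl in H. lra. }
  pose proof (Hpt m (le_n m)). pose proof (Hpt (S m) ltac:(lia)).
  assert (sqnorm r <= 40 * (eps / 41)).
  { apply (rhas_sum_le_bound _ _ _ (proj1 (inner_self_has_sum r Hr))). intros L HL.
    eapply Rle_trans; [apply (rlsum_le _ (resid_bound m v)); intros; auto|].
    unfold resid_bound. rewrite rlsum_add.
    rewrite (rlsum_filter (fun i => Nat.leb m i) (fun i => 8 * Cnorm2 (v i))).
    rewrite (rlsum_filter (fun i => orb (Nat.eqb i m) (Nat.eqb i (S m)))
      (fun _ => 8 * (Cnorm2 (v m) + Cnorm2 (v (S m))))).
    rewrite rlsum_scal.
    assert (Htail : rlsum (fun i => Cnorm2 (v i)) (filter (fun i => Nat.leb m i) L) <= eps / 41).
    { apply (Hm0 m); auto using NoDup_filter. intros i Hi. apply filter_In in Hi. apply Nat.leb_le; tauto. }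
    assert (Hpair : rlsum (fun _ => 8 * (Cnorm2 (v m) + Cnorm2 (v (S m))))
              (filter (fun i => orb (Nat.eqb i m) (Nat.eqb i (S m))) L)
            <= rlsum (fun _ => 8 * (Cnorm2 (v m) + Cnorm2 (v (S m)))) [m; S m]).
    { apply rlsum_incl_le; auto using NoDup_filter.
      - intros; pose proof (Cnorm2_nonneg (v m)); pose proof (Cnorm2_nonneg (v (S m))); lra.
      - intros i Hi. apply filter_In in Hi as [_ Hi].
        apply Bool.orb_true_iff in Hi as [Hi|Hi]; apply Nat.eqb_eq in Hi; subst; simpl; auto. }
    simpl in Hpair. lra. }
  lra.
Qed.

Lemma resid_bound_block (v : nat -> C) k al be ga i : block_idempotent al be ga ->
  Cnorm2 (Csub (v i) (if Nat.ltb i k then v i else block_op k al be ga v i)) <= resid_bound k v i.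
Proof.
  intros Hp. destruct (block_idempotent_bounds _ _ _ Hp) as [Ba [Bb Bg]].
  pose proof (Cnorm2_nonneg (v k)). pose proof (Cnorm2_nonneg (v (S k))). pose proof (Cnorm2_nonneg (v i)).
  unfold resid_bound. destruct (Nat.ltb_spec i k).
  - decide_nat_tests. replace (Csub (v i) (v i)) with C0 by ring.
    unfold Cnorm2; simpl. destruct (orb (Nat.eqb i k) (Nat.eqb i (S k))); lra.
  - decide_nat_tests. unfold block_op.
    destruct (Nat.eqb_spec i k) as [->|]; [|destruct (Nat.eqb_spec i (S k)) as [->|]]; simpl.
    + replace (Csub (v k) (Cadd (Cscale al (v k)) (Cscale be (v (S k))))) with
        (Cadd (Cscale (1 - al) (v k)) (Cscale (- be) (v (S k)))) by (apply C_ext; simpl; ring).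
      eapply Rle_trans; [apply Cnorm2_add_le|]. rewrite !Cnorm2_scale.
      assert ((1 - al) * (1 - al) <= 1) by nra. assert (- be * - be <= 1) by nra.
      assert ((1 - al) * (1 - al) * Cnorm2 (v k) <= Cnorm2 (v k)) by nra.
      assert (- be * - be * Cnorm2 (v (S k)) <= Cnorm2 (v (S k))) by nra. lra.
    + replace (Csub (v (S k)) (Cadd (Cscale be (v k)) (Cscale ga (v (S k))))) with
        (Cadd (Cscale (- be) (v k)) (Cscale (1 - ga) (v (S k)))) by (apply C_ext; simpl; ring).
      eapply Rle_trans; [apply Cnorm2_add_le|]. rewrite !Cnorm2_scale.
      assert ((1 - ga) * (1 - ga) <= 1) by nra. assert (- be * - be <= 1) by nra.
      assert ((1 - ga) * (1 - ga) * Cnorm2 (v (S k)) <= Cnorm2 (v (S k))) by nra.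
      assert (- be * - be * Cnorm2 (v k) <= Cnorm2 (v k)) by nra. lra.
    + replace (Csub (v i) C0) with (v i) by ring. lra.
Qed.

Lemma block_resolution_PVM F : block_resolution F -> is_PVM F.
Proof.
  intros [HP Hn]. split; auto. intros v Hv eps He.
  destruct (resid_small v Hv eps He) as [m0 Hm0].
  exists (S m0). intros n Hnn. destruct (Hn n) as [m [al [be [ga [Hm [Hp Hform]]]]]].
  apply (Hm0 m); [lia| |].
  - rewrite vsub_lincomb. apply l2_lincomb, psum_vec_l2; auto.
  - intros i. unfold vsub. rewrite Hform. apply resid_bound_block; auto.
Qed.

Lemma ket_proj_resolution : block_resolution ket_proj.
Proof.
  split; [intros a; rewrite ket_proj_block; apply block_op_projector; repeat split; ring|].
  intros n. exists n, 0, 0, 0. repeat split; try lia; try ring.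
  intros v i. rewrite block_op_zero. induction n as [|n IH]; [reflexivity|].
  rewrite psum_vec_S, IH. unfold ket_proj.
  destruct (lt_eq_lt_dec i n) as [[H| ->]|H]; decide_nat_tests; ring.
Qed.

Lemma orb_succ_pair_true i a : (a <= i < S (S a))%nat -> orb (Nat.eqb i a) (Nat.eqb i (S a)) = true.
Proof.
  intros H. destruct (Nat.eq_dec i a) as [->|]; [rewrite Nat.eqb_refl; auto|].
  decide_nat_tests. auto.
Qed.

Ltac block_op_simpl :=
  first [ rewrite block_op_add_compl
        | rewrite block_op_outside by (intros [?|[?|[]]]; lia)
        | idtac ];
  try (rewrite orb_succ_pair_true by lia); decide_nat_tests; try ring.

Section BlockFamily.
Variables (F : nat -> Op nat) (al be ga : nat -> R) (o : nat).
Hypotheses (HF0 : forall m, F (2 * m)%nat = block_op (2 * m + o) (al m) (be m) (ga m))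
  (HF1 : forall m, F (2 * m + 1)%nat = block_op (2 * m + o) (1 - al m) (- be m) (1 - ga m)).

Lemma block_family_psum j :
  (forall v i, psum_vec F (2 * j) v i =
     if andb (Nat.leb o i) (Nat.ltb i (2 * j + o)) then v i else C0) /\
  (forall v i, psum_vec F (2 * j + 1) v i =
     if andb (Nat.leb o i) (Nat.ltb i (2 * j + o)) then v i else block_op (2 * j + o) (al j) (be j) (ga j) v i).
Proof.
  induction j as [|j [_ IH1]].
  - assert (E0 : forall v i, psum_vec F 0 v i = if andb (Nat.leb o i) (Nat.ltb i (2 * 0 + o)) then v i else C0).
    { intros. unfold psum_vec. simpl. destruct (Nat.lt_ge_cases i o); decide_nat_tests; auto. }
    split; auto. intros v i. replace (2 * 0 + 1)%nat with (S 0) by lia. rewrite psum_vec_S, E0.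
    replace 0%nat with (2 * 0)%nat at 3 by lia. rewrite HF0.
    destruct (Nat.lt_ge_cases i o); decide_nat_tests; ring.
  - assert (E2 : forall v i, psum_vec F (2 * S j) v i =
                 if andb (Nat.leb o i) (Nat.ltb i (2 * S j + o)) then v i else C0).
    { intros v i. replace (2 * S j)%nat with (S (2 * j + 1)) by lia. rewrite psum_vec_S, IH1, HF1.
      destruct (Nat.lt_ge_cases i o);
        [|destruct (Nat.lt_ge_cases i (2 * j + o)); [|destruct (Nat.lt_ge_cases i (2 * j + o + 2))]];
        decide_nat_tests; block_op_simpl. }
    split; auto. intros v i. replace (2 * S j + 1)%nat with (S (2 * S j)) by lia.
    rewrite psum_vec_S, E2, HF0.
    destruct (Nat.lt_ge_cases i o); [|destruct (Nat.lt_ge_cases i (2 * S j + o))];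
      decide_nat_tests; block_op_simpl.
Qed.

End BlockFamily.

Definition even_block_family (muf : nat -> R) (s : R) (a : nat) : Op nat :=
  eigproj (2 * (a / 2))%nat (muf (a / 2)%nat) s (sgn a).

Definition odd_block_family (muf : nat -> R) (s : R) (a : nat) : Op nat :=
  match a with
  | O => ket_proj 0
  | S a' => eigproj (2 * (a' / 2) + 1)%nat (muf (a' / 2)%nat) s (sgn a')
  end.

Section EigenBlocks.
Variables (muf : nat -> R) (s : R) (Hs : s * s = 1).

Let al m := (1 + cos (muf m)) / 2.
Let be m := s * sin (muf m) / 2.
Let ga m := (1 - cos (muf m)) / 2.

Lemma eigproj_plus_block o m : eigproj (2 * m + o) (muf m) s 1 = block_op (2 * m + o) (al m) (be m) (ga m).
Proof. rewrite eigproj_block. unfold al, be, ga. f_equal; field. Qed.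

Lemma eigproj_minus_block o m :
  eigproj (2 * m + o) (muf m) s (-1) = block_op (2 * m + o) (1 - al m) (- be m) (1 - ga m).
Proof. rewrite eigproj_block. unfold al, be, ga. f_equal; field. Qed.

Lemma eigen_block_projector o m : is_projector (eigproj (2 * m + o) (muf m) s 1) /\
  is_projector (eigproj (2 * m + o) (muf m) s (-1)).
Proof.
  rewrite eigproj_plus_block, eigproj_minus_block.
  split; apply block_op_projector; [|apply block_idempotent_compl]; apply eigproj_idempotent; auto.
Qed.

Lemma even_block_family_resolution : block_resolution (even_block_family muf s).
Proof.
  assert (H0 : forall m, even_block_family muf s (2 * m)%nat = block_op (2 * m + 0) (al m) (be m) (ga m)).
  { intros m. unfold even_block_family. rewrite div2_double, sgn_double.
    rewrite <- (Nat.add_0_r (2 * m)) at 1.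
    apply eigproj_plus_block. }
  assert (H1 : forall m, even_block_family muf s (2 * m + 1)%nat =
                         block_op (2 * m + 0) (1 - al m) (- be m) (1 - ga m)).
  { intros m. unfold even_block_family. rewrite div2_double_S, sgn_double_S.
    rewrite <- (Nat.add_0_r (2 * m)) at 1.
    apply eigproj_minus_block. }
  split.
  - intros a. unfold even_block_family. rewrite <- (Nat.add_0_r (2 * (a / 2))).
    destruct (parity a) as [Ea|Ea]; rewrite Ea at 3;
      [rewrite sgn_double|rewrite sgn_double_S]; apply eigen_block_projector.
  - intros n. destruct (block_family_psum _ al be ga 0 H0 H1 (n / 2)) as [B0 B1].
    exists (2 * (n / 2))%nat. destruct (parity n) as [En|En].
    + exists 0, 0, 0. repeat split; try lia; try ring. intros v i. rewrite block_op_zero.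
      rewrite En at 1. rewrite B0, Nat.add_0_r. auto.
    + exists (al (n / 2)%nat), (be (n / 2)%nat), (ga (n / 2)%nat).
      repeat split; try lia; try apply eigproj_idempotent; auto.
      intros v i. rewrite En at 1. rewrite B1, !Nat.add_0_r. auto.
Qed.

Lemma odd_block_family_resolution : block_resolution (odd_block_family muf s).
Proof.
  set (G := fun a => odd_block_family muf s (S a)).
  assert (H0 : forall m, G (2 * m)%nat = block_op (2 * m + 1) (al m) (be m) (ga m)).
  { intros m. unfold G, odd_block_family. rewrite div2_double, sgn_double. apply eigproj_plus_block. }
  assert (H1 : forall m, G (2 * m + 1)%nat = block_op (2 * m + 1) (1 - al m) (- be m) (1 - ga m)).
  { intros m. unfold G, odd_block_family. rewrite div2_double_S, sgn_double_S. apply eigproj_minus_block. }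
  split.
  - intros [|a].
    + simpl. rewrite ket_proj_block. apply block_op_projector. repeat split; ring.
    + change (is_projector (eigproj (2 * (a / 2) + 1) (muf (a / 2)) s (sgn a))).
      destruct (parity a) as [Ea|Ea]; rewrite Ea at 3;
        [rewrite sgn_double|rewrite sgn_double_S]; apply eigen_block_projector.
  - intros [|n].
    + exists 0%nat, 0, 0, 0. repeat split; try lia; try ring.
      intros v i. rewrite block_op_zero. reflexivity.
    + destruct (block_family_psum G al be ga 1 H0 H1 (n / 2)) as [B0 B1].
      exists (2 * (n / 2) + 1)%nat.
      assert (Hfirst : forall v i, odd_block_family muf s 0 v i = if Nat.eqb i 0 then v 0%nat else C0)
        by reflexivity.
      destruct (parity n) as [En|En].
      * exists 0, 0, 0. repeat split; try lia; try ring. intros v i. rewrite block_op_zero.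
        rewrite psum_vec_shift, Hfirst. fold G. rewrite En at 1. rewrite B0.
        destruct (Nat.eq_dec i 0) as [->|]; [|destruct (Nat.lt_ge_cases i (2 * (n / 2) + 1))];
          decide_nat_tests; block_op_simpl.
      * exists (al (n / 2)%nat), (be (n / 2)%nat), (ga (n / 2)%nat).
        repeat split; try lia; try apply eigproj_idempotent; auto.
        intros v i. rewrite psum_vec_shift, Hfirst. fold G. rewrite En at 1. rewrite B1.
        destruct (Nat.eq_dec i 0) as [->|]; [|destruct (Nat.lt_ge_cases i (2 * (n / 2) + 1))];
          decide_nat_tests; block_op_simpl.
Qed.

End EigenBlocks.

Lemma A_star_PVM x : (x < 3)%nat -> is_PVM (A_star x).
Proof.
  intros Hx. destruct x as [|[|[|x]]]; try lia; apply block_resolution_PVM.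
  - apply ket_proj_resolution.
  - apply (even_block_family_resolution (fun _ => PI / 2) 1). ring.
  - replace (A_star 2) with (odd_block_family (fun _ => PI / 2) 1)
      by (apply functional_extensionality; intros [|a]; reflexivity).
    apply odd_block_family_resolution. ring.
Qed.

Lemma B_star_PVM y : (y < 4)%nat -> is_PVM (B_star y).
Proof.
  intros Hy. destruct y as [|[|[|[|y]]]]; try lia; apply block_resolution_PVM.
  - apply (even_block_family_resolution mu 1). ring.
  - apply (even_block_family_resolution mu (-1)). ring.
  - replace (B_star 2) with (odd_block_family mu' 1)
      by (apply functional_extensionality; intros [|b]; reflexivity).
    apply odd_block_family_resolution. ring.
  - replace (B_star 3) with (odd_block_family mu' (-1))
      by (apply functional_extensionality; intros [|b]; reflexivity).
    apply odd_block_family_resolution. ring.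
Qed.

Lemma pstar_in_Cqs : in_Cqs pstar.
Proof.
  exists (mkStrat nat nat Psi_inf A_star B_star). split.
  - exact (conj Psi_inf_l2 (conj Psi_inf_sqnorm (conj A_star_PVM B_star_PVM))).
  - intros a b x y _ _. reflexivity.
Qed.

(** * Choice of the scale and the lower bound on the Schmidt rank *)

Section Scales.
Variables (K : R) (HK1 : 1 / 2 <= K) (HK : forall a, cc a * cc a = K * inv_pow16 a).

Lemma tail_mass_ge M : (1 <= M)%nat ->
  2 * INR M * K / (4 ^ 16 * INR M ^ 16) <=
  rlsum (fun a => if Nat.leb (2 * M) a then cc a * cc a else 0) (seq 0 (4 * M)).
Proof.
  intros HM. assert (HMr : 1 <= INR M) by (apply (le_INR 1); lia).
  set (c := K / (4 ^ 16 * INR M ^ 16)).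
  assert (H4 : 4 ^ 16 <> 0) by (apply pow_nonzero; lra).
  assert (HMn : INR M ^ 16 <> 0) by (apply pow_nonzero; lra).
  replace (2 * INR M * K / (4 ^ 16 * INR M ^ 16)) with (INR (2 * M) * c)
    by (unfold c; rewrite mult_INR; simpl INR; field; lra).
  replace (4 * M)%nat with (2 * M + 2 * M)%nat by lia. rewrite <- (rlsum_const_from (2 * M) (2 * M) c).
  apply rlsum_le. intros a Ha. apply in_seq in Ha. destruct (Nat.leb (2 * M) a); [|lra].
  rewrite HK. unfold c, inv_pow16, Rdiv. apply Rmult_le_compat_l; [lra|].
  apply Rinv_le_contravar; [apply pow_lt, lt_0_INR; lia|].
  rewrite <- Rpow_mult_distr. apply pow_incr. split; [apply pos_INR|].
  replace 4 with (INR 4) by (simpl; lra). rewrite <- mult_INR. apply le_INR. lia.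
Qed.

Lemma block_mass_le M : (1 <= M)%nat -> block_mass M <= 2 * K / (2 ^ 16 * INR M ^ 16).
Proof.
  intros HM. assert (HMr : 1 <= INR M) by (apply (le_INR 1); lia).
  assert (Hterm : forall a, (2 * M <= a)%nat -> K * inv_pow16 a <= K / (2 ^ 16 * INR M ^ 16)).
  { intros a Ha. unfold inv_pow16, Rdiv. apply Rmult_le_compat_l; [lra|].
    apply Rinv_le_contravar; [apply Rmult_lt_0_compat; apply pow_lt; lra|].
    rewrite <- Rpow_mult_distr. apply pow_incr. split; [lra|].
    replace 2 with (INR 2) by (simpl; lra). rewrite <- mult_INR. apply le_INR. lia. }
  unfold block_mass. rewrite !HK.
  pose proof (Hterm (2 * M)%nat ltac:(lia)). pose proof (Hterm (2 * M + 1)%nat ltac:(lia)).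
  unfold Rdiv in *. lra.
Qed.

End Scales.

Lemma scale_le_rank_arith M N X delta W T : 1 <= M -> 0 < X -> 0 <= N ->
  delta <= X / 4 ^ 16 -> W <= 2 * X / 2 ^ 16 -> 2 * M * X / 4 ^ 16 <= T ->
  T - delta <= N * (W + delta) -> M <= 3 * 4 ^ 16 * N.
Proof.
  intros HM HX HN Hd HW HT Hmass.
  assert (Q2 : 2 <= 2 ^ 16) by (apply Rle_trans with (2 ^ 1); [simpl; lra|apply Rle_pow; [lra|lia]]).
  assert (Q4 : 2 <= 4 ^ 16) by (apply Rle_trans with (4 ^ 1); [simpl; lra|apply Rle_pow; [lra|lia]]).
  assert (HW3 : W + delta <= 3 * X).
  { assert (X / 2 ^ 16 <= X / 2) by (unfold Rdiv; apply Rmult_le_compat_l; [lra|apply Rinv_le_contravar; lra]).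
    assert (X / 4 ^ 16 <= X / 2) by (unfold Rdiv; apply Rmult_le_compat_l; [lra|apply Rinv_le_contravar; lra]).
    unfold Rdiv in *. lra. }
  assert (N * (W + delta) <= N * (3 * X)) by (apply Rmult_le_compat_l; auto).
  assert (HY : 0 < X / 4 ^ 16) by (apply Rdiv_lt_0_compat; lra).
  apply (Rmult_le_reg_r (X / 4 ^ 16)); auto.
  replace (3 * 4 ^ 16 * N * (X / 4 ^ 16)) with (N * (3 * X)) by (field; lra).
  unfold Rdiv in *. nra.
Qed.

(* The tail mass is of order M^-15 and the block mass of order M^-16, so for delta below
   the block mass the counting inequality forces N >= M up to a constant. *)
Lemma scale_le_schmidt_rank M N delta : (1 <= M)%nat ->
  delta * (8 * INR M) ^ 16 <= 1 ->
  rlsum (fun a => if Nat.leb (2 * M) a then cc a * cc a else 0) (seq 0 (4 * M)) - delta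
    <= INR N * (block_mass M + delta) ->
  INR M <= 3 * 4 ^ 16 * INR N.
Proof.
  intros HM HMd Hmass.
  destruct Cnorm_const_sqr as [s [_ [Hsb HKs]]].
  set (K := / s).
  assert (HK1 : 1 / 2 <= K) by (unfold K; apply Rle_trans with (/ 2); [lra|apply Rinv_le_contravar; lra]).
  assert (HK : forall a, cc a * cc a = K * inv_pow16 a) by (intros; apply cc_sqr_inv_pow16; auto).
  assert (HMr : 1 <= INR M) by (apply (le_INR 1); lia).
  assert (HMp : 0 < INR M ^ 16) by (apply pow_lt; lra).
  assert (P2 : 0 < 2 ^ 16) by (apply pow_lt; lra).
  assert (P4 : 0 < 4 ^ 16) by (apply pow_lt; lra).
  set (X := K / INR M ^ 16).
  refine (scale_le_rank_arith _ _ X delta (block_mass M) _ HMr _ (pos_INR N) _ _ _ Hmass).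
  - unfold X; apply Rdiv_lt_0_compat; lra.
  - rewrite Rpow_mult_distr in HMd.
    replace (8 ^ 16) with (2 ^ 16 * 4 ^ 16) in HMd by (rewrite <- Rpow_mult_distr; f_equal; ring).
    apply Rle_trans with (/ 2 ^ 16 * / (4 ^ 16 * INR M ^ 16)).
    + apply (Rmult_le_reg_r (2 ^ 16 * 4 ^ 16 * INR M ^ 16)); [nra|].
      replace (/ 2 ^ 16 * / (4 ^ 16 * INR M ^ 16) * (2 ^ 16 * 4 ^ 16 * INR M ^ 16)) with 1 by (field; lra).
      lra.
    + unfold X. replace (K / INR M ^ 16 / 4 ^ 16) with (K * / (4 ^ 16 * INR M ^ 16)) by (field; lra).
      apply Rmult_le_compat_r; [left; apply Rinv_0_lt_compat; nra|].
      apply Rle_trans with (/ 2); [apply Rinv_le_contravar|]; lra.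
  - replace (2 * X / 2 ^ 16) with (2 * K / (2 ^ 16 * INR M ^ 16)) by (unfold X; field; lra).
    apply block_mass_le; auto.
  - replace (2 * INR M * X / 4 ^ 16) with (2 * INR M * K / (4 ^ 16 * INR M ^ 16)) by (unfold X; field; lra).
    apply tail_mass_ge; auto.
Qed.

Lemma pow_lt_compat_S a b n : 0 <= a -> a < b -> a ^ S n < b ^ S n.
Proof.
  intros H1 H2. induction n as [|n IH]; [simpl; lra|].
  change (a * a ^ S n < b * b ^ S n). pose proof (pow_le a (S n) H1). nra.
Qed.

Lemma nat_in_upper_half y : 2 <= y -> exists M : nat, y / 2 < INR M <= y.
Proof.
  intros Hy. destruct (archimed (y / 2)) as [Hz1 Hz2].
  assert (Hz0 : (0 <= up (y / 2))%Z) by (apply le_IZR; lra).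
  exists (Z.to_nat (up (y / 2))). rewrite INR_IZR_INZ, Z2Nat.id by auto. lra.
Qed.

(* With y = delta^(-1/16), choose M with y / 16 < M <= y / 8. *)
Lemma scale_of_delta delta : 0 < delta -> delta <= / 16 ^ 16 ->
  exists M : nat, (1 <= M)%nat /\ delta * (8 * INR M) ^ 16 <= 1 /\
    Rpower delta (- (1 / 32)) <= 16 * INR M.
Proof.
  intros Hd Hd0.
  set (y := Rpower delta (- (1 / 16))).
  assert (Hy0 : 0 < y) by (unfold y, Rpower; apply exp_pos).
  assert (Hy16 : y ^ 16 = / delta).
  { unfold y. rewrite <- Rpower_pow, Rpower_mult by (unfold Rpower; apply exp_pos).
    replace (- (1 / 16) * INR 16) with (Ropp 1) by (simpl; field).
    rewrite Rpower_Ropp, Rpower_1; auto. }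
  assert (Hd1 : delta <= 1).
  { apply Rle_trans with (/ 16 ^ 16); auto. rewrite <- Rinv_1. apply Rinv_le_contravar; [lra|].
    rewrite <- (pow1 16). apply pow_incr; lra. }
  assert (Hy : 16 <= y).
  { apply Rnot_lt_le. intro Hlt. pose proof (pow_lt_compat_S y 16 15 (Rlt_le _ _ Hy0) Hlt) as Hpow.
    rewrite Hy16 in Hpow. apply Rinv_le_contravar in Hd0; [|lra]. rewrite Rinv_inv in Hd0. lra. }
  destruct (nat_in_upper_half (y / 8)) as [M [HM1 HM2]]; [lra|].
  exists M. repeat split.
  - apply INR_le. simpl. lra.
  - apply Rle_trans with (delta * y ^ 16).
    + apply Rmult_le_compat_l; [lra|]. apply pow_incr. lra.
    + rewrite Hy16, Rinv_r; lra.
  - apply Rle_trans with y; [|lra]. unfold y, Rpower.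
    assert (ln delta <= 0)
      by (destruct Hd1 as [Hl| ->]; [rewrite <- ln_1; left; apply ln_increasing|rewrite ln_1]; lra).
    destruct (Rle_lt_or_eq_dec (- (1 / 32) * ln delta) (- (1 / 16) * ln delta)) as [Hlt|Heq];
      [nra|left; apply exp_increasing; auto|rewrite Heq; lra].
Qed.

Theorem theorem1 :
  in_Cqs pstar /\
  exists c delta0 : R, 0 < c /\ 0 < delta0 /\
    forall delta : R, 0 < delta -> delta <= delta0 ->
    forall N : nat, (0 < N)%nat ->
    forall p : corr, in_CqN N p -> corr_dist_le p pstar delta ->
      c * Rpower delta (- (1 / 32)) <= INR N.
Proof.
  split; [exact pstar_in_Cqs|].
  assert (P4 : 0 < 4 ^ 16) by (apply pow_lt; lra).
  exists (/ (48 * 4 ^ 16)), (/ 16 ^ 16).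
  split; [apply Rinv_0_lt_compat; lra|]. split; [apply Rinv_0_lt_compat, pow_lt; lra|].
  intros delta Hd Hd0 N _ p [strat [Hval [Hsch Hprod]]] Hdist.
  destruct (correlation_schmidt_rank_factor strat N p Hval Hsch Hprod) as [t [s [Ht [Hle [Htsum Hslim]]]]].
  destruct (scale_of_delta delta Hd Hd0) as [M [HM [HMd HMy]]].
  pose proof (scale_le_schmidt_rank M N delta HM HMd
    (tail_mass_le p delta N t s Ht Hle Htsum Hslim Hdist M)) as HMN.
  apply (Rmult_le_reg_l (48 * 4 ^ 16)); [lra|].
  rewrite <- Rmult_assoc, Rinv_r, Rmult_1_l by lra. lra.
Qed.
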